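(* Let $k\ge0$, $f,g\in\mathbf P_k(\Gamma,\mathbb R^+;\mathbb C^3)$, and $\varphi\in C^\infty(\Gamma;\mathbb R^3)$ tangential ($\varphi\cdot n=0$). Then the problem: find $(u,v)\in C^\infty(\Gamma;C^\infty(\mathbb R^+))^2$ ($\mathbb C^3$-valued) with $$\partial_\eta v\times n+\tfrac1\omega u=e^{-\sqrt i\,\eta}f,\qquad -\partial_\eta u\times n+i\omega v=e^{-\sqrt i\,\eta}g\qquad\text{in }\Gamma\times\mathbb R^+,$$ $u(x_\Gamma,0)\times n=\varphi(x_\Gamma)$ for all $x_\Gamma\in\Gamma$, and $\int_0^\infty|u(x_\Gamma,\eta)|^2d\eta<\infty$, $\int_0^\infty|v(x_\Gamma,\eta)|^2d\eta<\infty$ for all $x_\Gamma\in\Gamma$, has a unique solution, and it is of the form $u=e^{-\sqrt i\,\eta}p$, $v=e^{-\sqrt i\,\eta}q$ with $p,q\in\mathbf P_{k+1}(\Gamma,\mathbb R^+;\mathbb C^3)$.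
   Context: $\Gamma$ is a smooth closed surface in $\mathbb R^3$ with unit normal field $n$; $\omega>0$; $\sqrt i:=\frac{\sqrt2}{2}(1+i)$. Functions are of $(x_\Gamma,\eta)\in\Gamma\times\mathbb R^+$. $\mathbf P_k(\Gamma,\mathbb R^+;\mathbb C^3)$ denotes the set of functions $u(x_\Gamma,\eta)=\sum_{j=0}^k a_j(x_\Gamma)\eta^j$ with $a_j\in C^\infty(\Gamma;\mathbb C^3)$. *)

From Stdlib Require Import Reals.
Open Scope R_scope.

Record R3 := mkR3 { x1 : R; x2 : R; x3 : R }.
Record C := mkC { re : R; im : R }.
Record C3 := mkC3 { c1 : C; c2 : C; c3 : C }.

Definition dot (a b : R3) : R := x1 a * x1 b + x2 a * x2 b + x3 a * x3 b.
Definition dist3 (a b : R3) : R :=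
  sqrt ((x1 a - x1 b)^2 + (x2 a - x2 b)^2 + (x3 a - x3 b)^2).

Definition Cadd (z w : C) : C := mkC (re z + re w) (im z + im w).
Definition Cmul (z w : C) : C :=
  mkC (re z * re w - im z * im w) (re z * im w + im z * re w).
Definition Copp (z : C) : C := mkC (- re z) (- im z).
Definition RC (r : R) : C := mkC r 0.
Definition Cexp (z : C) : C := mkC (exp (re z) * cos (im z)) (exp (re z) * sin (im z)).
Definition sqrti : C := mkC (sqrt 2 / 2) (sqrt 2 / 2).
Definition Edecay (eta : R) : C := Cexp (Cmul (RC (- eta)) sqrti).

Definition C3add (a b : C3) : C3 := mkC3 (Cadd (c1 a) (c1 b)) (Cadd (c2 a) (c2 b)) (Cadd (c3 a) (c3 b)).
Definition C3opp (a : C3) : C3 := mkC3 (Copp (c1 a)) (Copp (c2 a)) (Copp (c3 a)).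
Definition C3scal (z : C) (a : C3) : C3 := mkC3 (Cmul z (c1 a)) (Cmul z (c2 a)) (Cmul z (c3 a)).
Definition C3cross (a : C3) (n : R3) : C3 :=
  mkC3 (Cadd (Cmul (c2 a) (RC (x3 n))) (Copp (Cmul (c3 a) (RC (x2 n)))))
       (Cadd (Cmul (c3 a) (RC (x1 n))) (Copp (Cmul (c1 a) (RC (x3 n)))))
       (Cadd (Cmul (c1 a) (RC (x2 n))) (Copp (Cmul (c2 a) (RC (x1 n))))).
Definition realC3 (a : R3) : C3 := mkC3 (RC (x1 a)) (RC (x2 a)) (RC (x3 a)).
Definition C3norm2 (a : C3) : R :=
  re (c1 a) ^ 2 + im (c1 a) ^ 2 + re (c2 a) ^ 2 + im (c2 a) ^ 2 + re (c3 a) ^ 2 + im (c3 a) ^ 2.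
Definition cproj (j : nat) (a : C3) : R :=
  match j with
  | 0%nat => re (c1 a) | 1%nat => im (c1 a)
  | 2%nat => re (c2 a) | 3%nat => im (c2 a)
  | 4%nat => re (c3 a) | _ => im (c3 a)
  end.

Definition cont4 (F : R -> R -> R -> R -> R) : Prop :=
  forall a b c d eps, 0 < eps -> exists del, 0 < del /\
    forall a' b' c' d', Rabs (a' - a) < del -> Rabs (b' - b) < del ->
      Rabs (c' - c) < del -> Rabs (d' - d) < del ->
      Rabs (F a' b' c' d' - F a b c d) < eps.

Fixpoint Ck (n : nat) (F : R -> R -> R -> R -> R) : Prop :=
  cont4 F /\
  match n with
  | O => True
  | S m => exists D1 D2 D3 D4 : R -> R -> R -> R -> R,
      (forall a b c d, derivable_pt_lim (fun t => F t b c d) a (D1 a b c d)) /\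
      (forall a b c d, derivable_pt_lim (fun t => F a t c d) b (D2 a b c d)) /\
      (forall a b c d, derivable_pt_lim (fun t => F a b t d) c (D3 a b c d)) /\
      (forall a b c d, derivable_pt_lim (fun t => F a b c t) d (D4 a b c d)) /\
      Ck m D1 /\ Ck m D2 /\ Ck m D3 /\ Ck m D4
  end.

Definition smooth4 (F : R -> R -> R -> R -> R) : Prop := forall n, Ck n F.

(* compact, nonempty, and locally a regular level set of a smooth function *)
Definition is_closed_surface (Gam : R3 -> Prop) : Prop :=
  (exists p, Gam p) /\
  (exists M, forall p, Gam p -> dist3 p (mkR3 0 0 0) <= M) /\
  (forall p, (forall eps, 0 < eps -> exists q, Gam q /\ dist3 p q < eps) -> Gam p) /\
  (forall p, Gam p -> exists (psi : R -> R -> R -> R) (r g1 g2 g3 : R),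
     smooth4 (fun a b c _ => psi a b c) /\ 0 < r /\
     derivable_pt_lim (fun t => psi t (x2 p) (x3 p)) (x1 p) g1 /\
     derivable_pt_lim (fun t => psi (x1 p) t (x3 p)) (x2 p) g2 /\
     derivable_pt_lim (fun t => psi (x1 p) (x2 p) t) (x3 p) g3 /\
     (g1 <> 0 \/ g2 <> 0 \/ g3 <> 0) /\
     forall q, dist3 p q < r -> (Gam q <-> psi (x1 q) (x2 q) (x3 q) = 0)).

(* C^infinity(Gamma): restriction to Gamma of a smooth function on the ambient space *)
Definition smoothG (Gam : R3 -> Prop) (h : R3 -> R) : Prop :=
  exists H, smooth4 H /\ forall p, Gam p -> h p = H (x1 p) (x2 p) (x3 p) 0.

Definition smoothG_R3 (Gam : R3 -> Prop) (a : R3 -> R3) : Prop :=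
  smoothG Gam (fun p => x1 (a p)) /\ smoothG Gam (fun p => x2 (a p)) /\
  smoothG Gam (fun p => x3 (a p)).

Definition smoothG_C3 (Gam : R3 -> Prop) (a : R3 -> C3) : Prop :=
  forall j, smoothG Gam (fun p => cproj j (a p)).

Definition unit_normal_field (Gam : R3 -> Prop) (n : R3 -> R3) : Prop :=
  smoothG_R3 Gam n /\
  forall p, Gam p -> dot (n p) (n p) = 1 /\
    forall (g1 g2 g3 : R -> R) (del v1 v2 v3 : R), 0 < del ->
      (forall t, Rabs t < del -> Gam (mkR3 (g1 t) (g2 t) (g3 t))) ->
      mkR3 (g1 0) (g2 0) (g3 0) = p ->
      derivable_pt_lim g1 0 v1 -> derivable_pt_lim g2 0 v2 -> derivable_pt_lim g3 0 v3 ->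
      dot (mkR3 v1 v2 v3) (n p) = 0.

(* C^infinity(Gamma; C^infinity(R^+)) (C^3-valued): restriction to Gamma x [0,oo)
   of a smooth function of (x, eta) in R^3 x R, componentwise *)
Definition smoothGR (Gam : R3 -> Prop) (h : R3 -> R -> R) : Prop :=
  exists H, smooth4 H /\ forall p eta, Gam p -> 0 <= eta -> h p eta = H (x1 p) (x2 p) (x3 p) eta.

Definition smoothGR_C3 (Gam : R3 -> Prop) (u : R3 -> R -> C3) : Prop :=
  forall j, smoothGR Gam (fun p eta => cproj j (u p eta)).

Fixpoint C3poly (a : nat -> R3 -> C3) (p : R3) (eta : R) (k : nat) : C3 :=
  match k with
  | O => a O p
  | S m => C3add (C3poly a p eta m) (C3scal (RC (eta ^ S m)) (a (S m) p))
  end.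

Definition inPk (Gam : R3 -> Prop) (k : nat) (f : R3 -> R -> C3) : Prop :=
  exists a : nat -> R3 -> C3, (forall j, smoothG_C3 Gam (a j)) /\
    forall p eta, Gam p -> 0 <= eta -> f p eta = C3poly a p eta k.

(* integral_0^oo h < oo, for nonnegative h *)
Definition finite_integral_R_plus (h : R -> R) : Prop :=
  (forall T, 0 <= T -> inhabited (Riemann_integrable h 0 T)) /\
  exists M, forall T (pr : Riemann_integrable h 0 T), 0 <= T -> RiemannInt pr <= M.

Definition IsSolution (Gam : R3 -> Prop) (n : R3 -> R3) (omega : R)
  (f g : R3 -> R -> C3) (phi : R3 -> R3) (u v : R3 -> R -> C3) : Prop :=
  smoothGR_C3 Gam u /\ smoothGR_C3 Gam v /\
  (exists du dv : R3 -> R -> C3,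
     (forall p eta j, Gam p -> 0 < eta ->
        derivable_pt_lim (fun t => cproj j (u p t)) eta (cproj j (du p eta)) /\
        derivable_pt_lim (fun t => cproj j (v p t)) eta (cproj j (dv p eta))) /\
     (forall p eta, Gam p -> 0 < eta ->
        C3add (C3cross (dv p eta) (n p)) (C3scal (RC (1 / omega)) (u p eta))
          = C3scal (Edecay eta) (f p eta) /\
        C3add (C3opp (C3cross (du p eta) (n p))) (C3scal (mkC 0 omega) (v p eta))
          = C3scal (Edecay eta) (g p eta))) /\
  (forall p, Gam p -> C3cross (u p 0) (n p) = realC3 (phi p)) /\
  (forall p, Gam p ->
     finite_integral_R_plus (fun eta => C3norm2 (u p eta)) /\
     finite_integral_R_plus (fun eta => C3norm2 (v p eta))).

From Pilot Require Import Defs.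
From Stdlib Require Import Reals Lra Lia Psatz Nsatz.
(* Re-import so that the record projections of Defs shadow homonyms of Reals. *)
Import Defs.
Open Scope R_scope.

(* Since (e^(-sqrt i eta) P)' = e^(-sqrt i eta) L P with
   L P = P' - sqrt i P, the ansatz turns the system into identities between
   coefficients.  Writing P_j = om N(f_j) + t_j (N the normal projection, t_j
   tangential) and Q_j = -(i/om) (g_j + (L t)_j x n), the second equation holds
   identically, and the first one becomes the triangular recursion
   2 sqrt i w_j - (j+1) w_(j+1) = R_j for w_j = (j+1) t_(j+1), solved
   downwards from j = k; t_0 = n x phi gives the boundary condition, and
   |e^(-sqrt i eta)|^2 = e^(-sqrt 2 eta) makes u and v square integrable.

   Along each normal line the difference (W, Z) of two solutions
   solves the homogeneous system; W and Z x n then split into the modes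
   W +- sqrt i om (Z x n), solutions of h' = -+ sqrt i h, so
   W = (e^(-sqrt i t) - e^(sqrt i t)) c / 2.  As |W|^2 >= t^2 |c|^2 / 8 is
   integrable, c = 0 and (W, Z) = 0. *)

Lemma C_ext z w : re z = re w -> im z = im w -> z = w.
Proof. destruct z, w; simpl; intros; subst; reflexivity. Qed.

Lemma C3_ext a b : c1 a = c1 b -> c2 a = c2 b -> c3 a = c3 b -> a = b.
Proof. destruct a, b; simpl; intros; subst; reflexivity. Qed.

Ltac cx := cbn [re im c1 c2 c3 C3add C3scal C3opp C3cross realC3 Cadd Cmul Copp RC].
Ltac ceq := apply C_ext; cx.
Ltac c3eq := apply C3_ext; apply C_ext; cx.

Definition zero3 : C3 := mkC3 (RC 0) (RC 0) (RC 0).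

Definition dotn (a : C3) (m : R3) : C :=
  Cadd (Cadd (Cmul (c1 a) (RC (x1 m))) (Cmul (c2 a) (RC (x2 m)))) (Cmul (c3 a) (RC (x3 m))).
Definition Nproj (m : R3) (a : C3) : C3 := C3scal (dotn a m) (realC3 m).

Definition rcross (a b : R3) : R3 :=
  mkR3 (x2 a * x3 b - x3 a * x2 b) (x3 a * x1 b - x1 a * x3 b) (x1 a * x2 b - x2 a * x1 b).

Lemma dotn_add a b m : dotn (C3add a b) m = Cadd (dotn a m) (dotn b m).
Proof. unfold dotn; ceq; ring. Qed.

Lemma dotn_scal z a m : dotn (C3scal z a) m = Cmul z (dotn a m).
Proof. unfold dotn; ceq; ring. Qed.

Lemma cross_cross_tangential (Y : C3) (n0 : R3) :
  dot n0 n0 = 1 -> dotn Y n0 = RC 0 -> C3cross (C3cross Y n0) n0 = C3opp Y.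
Proof.
  intros Hn HY. unfold dotn, dot in *. injection HY; cx; clear HY; intros.
  destruct n0 as [n1 n2 n3]; destruct Y as [[y1 y2] [y3 y4] [y5 y6]];
    cbn [re im c1 c2 c3 x1 x2 x3] in *.
  c3eq; nsatz.
Qed.

Lemma normal_tangential_decomp (a : C3) (n0 : R3) : dot n0 n0 = 1 ->
  a = C3add (Nproj n0 a) (C3opp (C3cross (C3cross a n0) n0)).
Proof.
  intros Hn. unfold Nproj, dotn, dot in *.
  destruct n0 as [n1 n2 n3]; destruct a as [[y1 y2] [y3 y4] [y5 y6]]; cbn [x1 x2 x3] in *.
  c3eq; nsatz.
Qed.

Lemma C3norm2_nonneg a : 0 <= C3norm2 a.
Proof. unfold C3norm2. repeat apply Rplus_le_le_0_compat; apply pow2_ge_0. Qed.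

Lemma C3norm2_add a b : C3norm2 (C3add a b) <= 2 * C3norm2 a + 2 * C3norm2 b.
Proof.
  assert (K : forall x y, (x + y) ^ 2 <= 2 * x ^ 2 + 2 * y ^ 2)
    by (intros x y; assert (0 <= (x - y) * (x - y)) by apply Rle_0_sqr; nra).
  unfold C3norm2; cx.
  repeat match goal with |- context [(?x + ?y) ^ 2] =>
    let h := fresh in assert (h := K x y); set ((x + y) ^ 2) in * end.
  lra.
Qed.

Lemma C3norm2_scal z a : C3norm2 (C3scal z a) = (re z ^ 2 + im z ^ 2) * C3norm2 a.
Proof. unfold C3norm2; cx; ring. Qed.

Lemma C3norm2_opp a : C3norm2 (C3opp a) = C3norm2 a.
Proof. unfold C3norm2; cx; ring. Qed.

Lemma C3norm2_eq0 a : C3norm2 a = 0 -> a = zero3.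
Proof.
  unfold C3norm2, zero3. intros H.
  assert (K1 := pow2_ge_0 (re (c1 a))); assert (K2 := pow2_ge_0 (im (c1 a)));
  assert (K3 := pow2_ge_0 (re (c2 a))); assert (K4 := pow2_ge_0 (im (c2 a)));
  assert (K5 := pow2_ge_0 (re (c3 a))); assert (K6 := pow2_ge_0 (im (c3 a))).
  rewrite <- !Rsqr_pow2 in *. c3eq; apply Rsqr_0_uniq; lra.
Qed.

Definition r2 := sqrt 2 / 2.

Lemma r2_sq : r2 * r2 = / 2.
Proof.
  unfold r2. replace (sqrt 2 / 2 * (sqrt 2 / 2)) with ((sqrt 2 * sqrt 2) / 4) by field.
  rewrite sqrt_sqrt by lra. field.
Qed.

Lemma r2_pos : 0 < r2.
Proof. unfold r2. assert (0 < sqrt 2) by (apply sqrt_lt_R0; lra). lra. Qed.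

Lemma r2_ge_half : / 2 <= r2.
Proof. assert (H := r2_sq). assert (H0 := r2_pos). nra. Qed.

Lemma sqrti_eq : sqrti = mkC r2 r2.
Proof. reflexivity. Qed.

(* Pointwise forms of the Stdlib rules, stated for lambda terms. *)
Lemma deriv_mult f g x lf lg : derivable_pt_lim f x lf -> derivable_pt_lim g x lg ->
  derivable_pt_lim (fun t => f t * g t) x (lf * g x + f x * lg).
Proof. intros; apply (derivable_pt_lim_mult f g); auto. Qed.

Lemma deriv_plus f g x lf lg : derivable_pt_lim f x lf -> derivable_pt_lim g x lg ->
  derivable_pt_lim (fun t => f t + g t) x (lf + lg).
Proof. intros; apply (derivable_pt_lim_plus f g); auto. Qed.

Lemma deriv_const c x : derivable_pt_lim (fun _ => c) x 0.
Proof. apply (derivable_pt_lim_const c). Qed.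

Lemma deriv_id x : derivable_pt_lim (fun t => t) x 1.
Proof. apply derivable_pt_lim_id. Qed.

Lemma deriv_ext f g x l l' : derivable_pt_lim f x l -> (forall t, f t = g t) -> l = l' ->
  derivable_pt_lim g x l'.
Proof.
  intros D H Hl. subst l'. intros e He. destruct (D e He) as [d Hd]. exists d.
  intros h H0 H1. rewrite <- !H. apply Hd; auto.
Qed.

Lemma deriv_local f g x l : 0 < x -> (forall t, 0 < t -> f t = g t) ->
  derivable_pt_lim f x l -> derivable_pt_lim g x l.
Proof.
  intros Hx H D e He. destruct (D e He) as [d Hd].
  assert (Hm : 0 < Rmin d x) by (apply Rmin_pos; [apply cond_pos| lra]).
  exists (mkposreal _ Hm). intros h H0 H1. simpl in H1.
  assert (Hm1 := Rmin_l d x); assert (Hm2 := Rmin_r d x).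
  apply Rabs_def2 in H1; destruct H1.
  rewrite <- !H by lra. apply Hd; auto. apply Rabs_def1; lra.
Qed.

Lemma deriv_scal a f x l : derivable_pt_lim f x l ->
  derivable_pt_lim (fun t => a * f t) x (a * l).
Proof.
  intros H. refine (deriv_ext _ _ _ _ _ (deriv_mult (fun _ => a) f x 0 l (deriv_const a x) H) _ _);
    intros; simpl; ring.
Qed.

Lemma deriv_comp_lin (h : R -> R) (dh : R -> R) a x :
  (forall y, derivable_pt_lim h y (dh y)) ->
  derivable_pt_lim (fun t => h (a * t)) x (a * dh (a * x)).
Proof.
  intros Hh.
  refine (deriv_ext _ _ _ _ _ (derivable_pt_lim_comp (fun t => a * t) h x a _ _ _) _ _).
  - refine (deriv_ext _ _ _ _ _ (deriv_scal a _ x _ (deriv_id x)) _ _); intros; simpl; ring.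
  - apply Hh.
  - intros; reflexivity.
  - simpl; ring.
Qed.

Lemma deriv_exp_lin a x : derivable_pt_lim (fun t => exp (a * t)) x (a * exp (a * x)).
Proof. apply (deriv_comp_lin exp exp); apply derivable_pt_lim_exp. Qed.

Lemma deriv_cos_lin a x : derivable_pt_lim (fun t => cos (a * t)) x (- a * sin (a * x)).
Proof.
  refine (deriv_ext _ _ _ _ _ (deriv_comp_lin cos (fun y => - sin y) a x _) _ _).
  - apply derivable_pt_lim_cos.
  - reflexivity.
  - ring.
Qed.

Lemma deriv_sin_lin a x : derivable_pt_lim (fun t => sin (a * t)) x (a * cos (a * x)).
Proof. apply (deriv_comp_lin sin cos); apply derivable_pt_lim_sin. Qed.

Lemma deriv_vanishing (g : R -> R) t L : 0 < t -> derivable_pt_lim g t L ->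
  (forall s, 0 < s -> g s = 0) -> L = 0.
Proof.
  intros Ht D Z. assert (D' : derivable_pt_lim (fun _ => 0) t L) by (apply (deriv_local g); auto).
  eapply uniqueness_limite. apply D'. apply deriv_const.
Qed.

Lemma cont_plus f g x : continuity_pt f x -> continuity_pt g x ->
  continuity_pt (fun t => f t + g t) x.
Proof. intros; apply (continuity_pt_plus f g); auto. Qed.

Lemma cont_minus f g x : continuity_pt f x -> continuity_pt g x ->
  continuity_pt (fun t => f t - g t) x.
Proof. intros; apply (continuity_pt_minus f g); auto. Qed.

Lemma cont_mult f g x : continuity_pt f x -> continuity_pt g x ->
  continuity_pt (fun t => f t * g t) x.
Proof. intros; apply (continuity_pt_mult f g); auto. Qed.

Lemma cont_const c x : continuity_pt (fun _ => c) x.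
Proof. apply continuity_pt_const. intros a b; reflexivity. Qed.

Lemma cont_ext f g x : continuity_pt f x -> (forall t, f t = g t) -> continuity_pt g x.
Proof.
  intros H E. unfold continuity_pt, continue_in, limit1_in, limit_in in *. intros e He.
  destruct (H e He) as [d [Hd Hx]]. exists d; split; auto. intros y Hy. rewrite <- !E. apply Hx; auto.
Qed.

Lemma cont_vanishing_at0 f : continuity_pt f 0 -> (forall t, 0 < t -> f t = 0) -> f 0 = 0.
Proof.
  intros Hc Hz. destruct (Req_dec (f 0) 0) as [|Hne]; auto. exfalso.
  unfold continuity_pt, continue_in, limit1_in, limit_in in Hc. simpl in Hc. unfold R_dist in Hc.
  destruct (Hc (Rabs (f 0))) as [d [Hd H]]. apply Rabs_pos_lt; auto.
  assert (H1 := H (d / 2)). rewrite Hz in H1 by lra.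
  rewrite Rminus_0_l, Rabs_Ropp in H1. assert (Rabs (f 0) < Rabs (f 0)); [|lra].
  apply H1. split. split; [exact I| lra]. rewrite Rminus_0_r, Rabs_pos_eq; lra.
Qed.

Lemma RiemannInt_primitive (f F : R -> R) a b (pr : Riemann_integrable f a b) :
  a <= b -> (forall x, derivable_pt_lim F x (f x)) -> (forall x, continuity_pt f x) ->
  RiemannInt pr = F b - F a.
Proof.
  intros Hab HF Hc.
  assert (C0 : forall x, a <= x <= b -> continuity_pt f x) by auto.
  rewrite (RiemannInt_P20 Hab (FTC_P1 Hab C0) pr).
  assert (A1 := RiemannInt_P29 Hab C0).
  assert (A2 : antiderivative f F a b).
  { split; auto. intros x _. exists (exist _ (f x) (HF x)). symmetry; apply derive_pt_eq_0; auto. }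
  destruct (antiderivative_Ucte _ _ _ _ _ A1 A2) as [c Hc'].
  rewrite (Hc' b), (Hc' a) by lra. ring.
Qed.

(** * Algebra of C^n functions of four real variables *)

Lemma cont4_const K : cont4 (fun _ _ _ _ => K).
Proof. intros a b c d e He. exists 1; split; [lra|]. intros. rewrite Rminus_diag, Rabs_R0; lra. Qed.

Lemma cont4_last_var : cont4 (fun _ _ _ d => d).
Proof. intros a b c d e He. exists e; split; auto. Qed.

Lemma cont4_plus F G : cont4 F -> cont4 G -> cont4 (fun a b c d => F a b c d + G a b c d).
Proof.
  intros HF HG a b c d e He.
  destruct (HF a b c d (e/2)) as [d1 [Hd1 H1]]; [lra|].
  destruct (HG a b c d (e/2)) as [d2 [Hd2 H2]]; [lra|].
  exists (Rmin d1 d2); split; [apply Rmin_pos; auto|].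
  intros. assert (Hm1 := Rmin_l d1 d2); assert (Hm2 := Rmin_r d1 d2).
  specialize (H1 a' b' c' d'); specialize (H2 a' b' c' d').
  replace (F a' b' c' d' + G a' b' c' d' - (F a b c d + G a b c d)) with
    ((F a' b' c' d' - F a b c d) + (G a' b' c' d' - G a b c d)) by ring.
  eapply Rle_lt_trans; [apply Rabs_triang|].
  assert (Rabs (F a' b' c' d' - F a b c d) < e/2) by (apply H1; lra).
  assert (Rabs (G a' b' c' d' - G a b c d) < e/2) by (apply H2; lra). lra.
Qed.

(* |f1 g1 - f0 g0| <= |f1 - f0| |g1| + |f0| |g1 - g0|, with |g1| <= |g0| + 1. *)
Lemma cont4_mult F G : cont4 F -> cont4 G -> cont4 (fun a b c d => F a b c d * G a b c d).
Proof.
  intros HF HG a b c d e He.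
  set (f0 := F a b c d). set (g0 := G a b c d).
  assert (Hf0 := Rabs_pos f0). assert (Hg0 := Rabs_pos g0).
  destruct (HF a b c d (e / (2 * (Rabs g0 + 1)))) as [d1 [Hd1 H1]].
  { apply Rdiv_lt_0_compat; lra. }
  destruct (HG a b c d (Rmin 1 (e / (2 * (Rabs f0 + 1))))) as [d2 [Hd2 H2]].
  { apply Rmin_pos; [lra|apply Rdiv_lt_0_compat; lra]. }
  exists (Rmin d1 d2); split; [apply Rmin_pos; auto|].
  intros. assert (Hm1 := Rmin_l d1 d2); assert (Hm2 := Rmin_r d1 d2).
  assert (A1 : Rabs (F a' b' c' d' - f0) < e / (2 * (Rabs g0 + 1))) by (apply H1; lra).
  assert (A2 : Rabs (G a' b' c' d' - g0) < Rmin 1 (e / (2 * (Rabs f0 + 1)))) by (apply H2; lra).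
  assert (A3 := Rmin_l 1 (e / (2 * (Rabs f0 + 1)))).
  assert (A4 := Rmin_r 1 (e / (2 * (Rabs f0 + 1)))).
  set (f1 := F a' b' c' d') in *. set (g1 := G a' b' c' d') in *.
  replace (f1 * g1 - f0 * g0) with ((f1 - f0) * g1 + f0 * (g1 - g0)) by ring.
  eapply Rle_lt_trans; [apply Rabs_triang|]. rewrite !Rabs_mult.
  assert (B1 : Rabs g1 <= Rabs g0 + 1).
  { replace g1 with (g0 + (g1 - g0)) by ring. eapply Rle_trans; [apply Rabs_triang|]. lra. }
  assert (B2 : Rabs (f1 - f0) * Rabs g1 <= e/2).
  { apply Rle_trans with (e / (2 * (Rabs g0 + 1)) * (Rabs g0 + 1)).
    - apply Rmult_le_compat; try apply Rabs_pos; lra.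
    - right; field; lra. }
  assert (B3 : Rabs f0 * Rabs (g1 - g0) < e/2).
  { assert (Y : 0 < e / (2 * (Rabs f0 + 1))) by (apply Rdiv_lt_0_compat; lra).
    apply Rle_lt_trans with (Rabs f0 * (e / (2 * (Rabs f0 + 1)))).
    - apply Rmult_le_compat; try apply Rabs_pos; lra.
    - apply Rlt_le_trans with ((Rabs f0 + 1) * (e / (2 * (Rabs f0 + 1)))); [nra|].
      right; field; lra. }
  lra.
Qed.

Lemma cont4_last_fun (h : R -> R) : (forall x, derivable_pt h x) -> cont4 (fun _ _ _ d => h d).
Proof.
  intros Hd a b c d e He.
  assert (Hc := derivable_continuous_pt _ _ (Hd d)).
  unfold continuity_pt, continue_in, limit1_in, limit_in in Hc. simpl in Hc.
  destruct (Hc e He) as [del [Hdel H]]. exists del; split; auto.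
  intros. destruct (Req_dec d' d) as [->|Hne].
  - rewrite Rminus_diag, Rabs_R0; auto.
  - apply H. split; [split; [exact I| auto]|]. unfold R_dist. auto.
Qed.

Lemma Ck_cont n F : Ck n F -> cont4 F.
Proof. destruct n; simpl; tauto. Qed.

Lemma Ck_pred n : forall F, Ck (S n) F -> Ck n F.
Proof.
  induction n; intros F H.
  - simpl in *. tauto.
  - destruct H as [Hc [D1 [D2 [D3 [D4 [H1 [H2 [H3 [H4 [K1 [K2 [K3 K4]]]]]]]]]]]].
    split; auto. exists D1, D2, D3, D4; repeat split; auto.
Qed.

Lemma Ck_const n : forall K, Ck n (fun _ _ _ _ => K).
Proof.
  induction n; intros K; split; try apply cont4_const; auto.
  exists (fun _ _ _ _ => 0), (fun _ _ _ _ => 0), (fun _ _ _ _ => 0), (fun _ _ _ _ => 0).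
  repeat split; intros; try apply deriv_const; apply IHn.
Qed.

Lemma Ck_plus n : forall F G, Ck n F -> Ck n G -> Ck n (fun a b c d => F a b c d + G a b c d).
Proof.
  induction n; intros F G HF HG.
  - split; auto. apply cont4_plus; apply Ck_cont with 0%nat; auto.
  - destruct HF as [Hc [D1 [D2 [D3 [D4 [H1 [H2 [H3 [H4 [K1 [K2 [K3 K4]]]]]]]]]]]].
    destruct HG as [Hc' [E1 [E2 [E3 [E4 [J1 [J2 [J3 [J4 [L1 [L2 [L3 L4]]]]]]]]]]]].
    split; [apply cont4_plus; auto|].
    exists (fun a b c d => D1 a b c d + E1 a b c d), (fun a b c d => D2 a b c d + E2 a b c d),
      (fun a b c d => D3 a b c d + E3 a b c d), (fun a b c d => D4 a b c d + E4 a b c d).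
    repeat split; intros; try apply IHn; auto; apply (deriv_plus (fun t => _) (fun t => _)); auto.
Qed.

(* Leibniz rule: the partial derivatives of F G are again sums of products of
   C^n functions. *)
Lemma Ck_mult n : forall F G, Ck n F -> Ck n G -> Ck n (fun a b c d => F a b c d * G a b c d).
Proof.
  induction n; intros F G HF HG.
  - split; auto. apply cont4_mult; apply Ck_cont with 0%nat; auto.
  - assert (HF' := Ck_pred _ _ HF). assert (HG' := Ck_pred _ _ HG).
    destruct HF as [Hc [D1 [D2 [D3 [D4 [H1 [H2 [H3 [H4 [K1 [K2 [K3 K4]]]]]]]]]]]].
    destruct HG as [Hc' [E1 [E2 [E3 [E4 [J1 [J2 [J3 [J4 [L1 [L2 [L3 L4]]]]]]]]]]]].
    split; [apply cont4_mult; auto|].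
    exists (fun a b c d => D1 a b c d * G a b c d + F a b c d * E1 a b c d),
      (fun a b c d => D2 a b c d * G a b c d + F a b c d * E2 a b c d),
      (fun a b c d => D3 a b c d * G a b c d + F a b c d * E3 a b c d),
      (fun a b c d => D4 a b c d * G a b c d + F a b c d * E4 a b c d).
    repeat split; intros; try (apply Ck_plus; apply IHn; auto);
    apply (deriv_mult (fun t => _) (fun t => _)); auto.
Qed.

Lemma Ck_last_var n : Ck n (fun _ _ _ d => d).
Proof.
  destruct n; split; try apply cont4_last_var; auto.
  exists (fun _ _ _ _ => 0), (fun _ _ _ _ => 0), (fun _ _ _ _ => 0), (fun _ _ _ _ => 1).
  repeat split; intros; try apply Ck_const; try apply deriv_id; apply deriv_const.
Qed.

Lemma Ck_freeze_last n : forall H, Ck n H -> Ck n (fun a b c _ => H a b c 0).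
Proof.
  assert (C0 : forall H, cont4 H -> cont4 (fun a b c _ => H a b c 0)).
  { intros H HH a b c d e He. destruct (HH a b c 0 e He) as [del [Hd Hx]].
    exists del; split; auto. intros; apply Hx; auto. rewrite Rminus_diag, Rabs_R0; auto. }
  induction n; intros H HH.
  - split; auto. apply C0; apply Ck_cont with 0%nat; auto.
  - destruct HH as [Hc [D1 [D2 [D3 [D4 [H1 [H2 [H3 [H4 [K1 [K2 [K3 K4]]]]]]]]]]]].
    split; [apply C0; auto|].
    exists (fun a b c _ => D1 a b c 0), (fun a b c _ => D2 a b c 0), (fun a b c _ => D3 a b c 0),
      (fun _ _ _ _ => 0).
    repeat split; intros; auto; try apply IHn; auto; try apply deriv_const; apply Ck_const.
Qed.

(* The damped waves exp(a d) (p cos(b d) + q sin(b d)) form a family closed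
   under differentiation; this family contains every component of the
   complex exponentials used below. *)
Definition damped_wave (a b p q d : R) : R := exp (a * d) * (p * cos (b * d) + q * sin (b * d)).

Lemma deriv_damped_wave a b p q x :
  derivable_pt_lim (damped_wave a b p q) x (damped_wave a b (a * p + b * q) (a * q - b * p) x).
Proof.
  unfold damped_wave.
  refine (deriv_ext _ _ _ _ _ (deriv_mult _ _ _ _ _ (deriv_exp_lin a x)
    (deriv_plus _ _ _ _ _ (deriv_scal p _ _ _ (deriv_cos_lin b x))
                          (deriv_scal q _ _ _ (deriv_sin_lin b x)))) _ _).
  - intros; reflexivity.
  - ring.
Qed.

Lemma Ck_damped_wave n : forall a b p q, Ck n (fun _ _ _ d => damped_wave a b p q d).
Proof.
  assert (C : forall a b p q, cont4 (fun _ _ _ d => damped_wave a b p q d)).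
  { intros. apply cont4_last_fun. intros x; eexists; apply deriv_damped_wave. }
  induction n; intros a b p q; split; auto.
  exists (fun _ _ _ _ => 0), (fun _ _ _ _ => 0), (fun _ _ _ _ => 0),
    (fun _ _ _ d => damped_wave a b (a * p + b * q) (a * q - b * p) d).
  repeat split; intros; try apply Ck_const; try apply deriv_const; auto.
  apply deriv_damped_wave.
Qed.

Section SmoothOnGamma.
Variable Gam : R3 -> Prop.

Lemma smoothG_ext h h' : smoothG Gam h -> (forall p, Gam p -> h' p = h p) -> smoothG Gam h'.
Proof. intros [H [HH E]] E'. exists H; split; auto. intros; rewrite E'; auto. Qed.

Lemma smoothG_const K : smoothG Gam (fun _ => K).
Proof. exists (fun _ _ _ _ => K); split; auto. intros m; apply Ck_const. Qed.

Lemma smoothG_plus h g : smoothG Gam h -> smoothG Gam g -> smoothG Gam (fun p => h p + g p).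
Proof.
  intros [H [HH E]] [G [HG E']]. exists (fun a b c d => H a b c d + G a b c d).
  split. intros m; apply Ck_plus; auto. intros; rewrite E, E'; auto.
Qed.

Lemma smoothG_mult h g : smoothG Gam h -> smoothG Gam g -> smoothG Gam (fun p => h p * g p).
Proof.
  intros [H [HH E]] [G [HG E']]. exists (fun a b c d => H a b c d * G a b c d).
  split. intros m; apply Ck_mult; auto. intros; rewrite E, E'; auto.
Qed.

Lemma smoothG_opp h : smoothG Gam h -> smoothG Gam (fun p => - h p).
Proof.
  intros Hh. apply smoothG_ext with (fun p => (-1) * h p).
  - apply smoothG_mult; auto. apply smoothG_const.
  - intros; ring.
Qed.

Lemma smoothGR_ext h h' : smoothGR Gam h ->
  (forall p e, Gam p -> 0 <= e -> h' p e = h p e) -> smoothGR Gam h'.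
Proof. intros [H [HH E]] E'. exists H; split; auto. intros; rewrite E'; auto. Qed.

Lemma smoothGR_plus h g : smoothGR Gam h -> smoothGR Gam g ->
  smoothGR Gam (fun p e => h p e + g p e).
Proof.
  intros [H [HH E]] [G [HG E']]. exists (fun a b c d => H a b c d + G a b c d).
  split. intros m; apply Ck_plus; auto. intros; rewrite E, E'; auto.
Qed.

Lemma smoothGR_mult h g : smoothGR Gam h -> smoothGR Gam g ->
  smoothGR Gam (fun p e => h p e * g p e).
Proof.
  intros [H [HH E]] [G [HG E']]. exists (fun a b c d => H a b c d * G a b c d).
  split. intros m; apply Ck_mult; auto. intros; rewrite E, E'; auto.
Qed.

Lemma smoothGR_const K : smoothGR Gam (fun _ _ => K).
Proof. exists (fun _ _ _ _ => K); split; auto. intros m; apply Ck_const. Qed.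

Lemma smoothGR_of_smoothG h : smoothG Gam h -> smoothGR Gam (fun p _ => h p).
Proof.
  intros [H [HH E]]. exists (fun a b c _ => H a b c 0). split.
  - intros m; apply Ck_freeze_last; auto.
  - intros; auto.
Qed.

Lemma smoothGR_pow j : smoothGR Gam (fun _ e => e ^ j).
Proof.
  induction j.
  - apply (smoothGR_const 1).
  - apply smoothGR_ext with (fun p e => e * e ^ j).
    + apply smoothGR_mult; auto. exists (fun _ _ _ d => d); split; auto. intros m; apply Ck_last_var.
    + intros; simpl; ring.
Qed.

Lemma smoothGR_damped_wave a b p q : smoothGR Gam (fun _ e => damped_wave a b p q e).
Proof.
  exists (fun _ _ _ d => damped_wave a b p q d); split; auto. intros m; apply Ck_damped_wave.
Qed.

Definition smoothGc (z : R3 -> C) : Prop :=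
  smoothG Gam (fun p => re (z p)) /\ smoothG Gam (fun p => im (z p)).
Definition smoothG3 (a : R3 -> C3) : Prop :=
  smoothGc (fun p => c1 (a p)) /\ smoothGc (fun p => c2 (a p)) /\ smoothGc (fun p => c3 (a p)).
Definition smoothGRc (z : R3 -> R -> C) : Prop :=
  smoothGR Gam (fun p e => re (z p e)) /\ smoothGR Gam (fun p e => im (z p e)).
Definition smoothGR3 (a : R3 -> R -> C3) : Prop :=
  smoothGRc (fun p e => c1 (a p e)) /\ smoothGRc (fun p e => c2 (a p e)) /\
  smoothGRc (fun p e => c3 (a p e)).

Lemma smoothG3_C3 a : smoothG3 a -> smoothG_C3 Gam a.
Proof. intros [[A B] [[C' D] [E F]]] j. do 5 (destruct j as [|j]; auto). Qed.

Lemma C3_smoothG3 a : smoothG_C3 Gam a -> smoothG3 a.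
Proof.
  intros H. repeat split;
  [apply (H 0%nat)|apply (H 1%nat)|apply (H 2%nat)|apply (H 3%nat)|apply (H 4%nat)|apply (H 5%nat)].
Qed.

Lemma smoothGR3_C3 a : smoothGR3 a -> smoothGR_C3 Gam a.
Proof. intros [[A B] [[C' D] [E F]]] j. do 5 (destruct j as [|j]; auto). Qed.

Lemma smoothGc_add z w : smoothGc z -> smoothGc w -> smoothGc (fun p => Cadd (z p) (w p)).
Proof. intros [A B] [C' D]; split; simpl; apply smoothG_plus; auto. Qed.

Lemma smoothGc_mul z w : smoothGc z -> smoothGc w -> smoothGc (fun p => Cmul (z p) (w p)).
Proof.
  intros [A B] [C' D]; split; simpl.
  - apply smoothG_plus; [apply smoothG_mult; auto| apply smoothG_opp; apply smoothG_mult; auto].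
  - apply smoothG_plus; apply smoothG_mult; auto.
Qed.

Lemma smoothGc_const z : smoothGc (fun _ => z).
Proof. split; apply smoothG_const. Qed.

Lemma smoothGc_RC h : smoothG Gam h -> smoothGc (fun p => RC (h p)).
Proof. split; simpl; auto. apply smoothG_const. Qed.

Lemma smoothGc_opp z : smoothGc z -> smoothGc (fun p => Copp (z p)).
Proof. intros [A B]; split; simpl; apply smoothG_opp; auto. Qed.

Lemma smoothG3_add a b : smoothG3 a -> smoothG3 b -> smoothG3 (fun p => C3add (a p) (b p)).
Proof. intros [A [B C']] [D [E F]]; split; [|split]; simpl; apply smoothGc_add; auto. Qed.

Lemma smoothG3_scal z a : smoothGc z -> smoothG3 a -> smoothG3 (fun p => C3scal (z p) (a p)).
Proof. intros Z [A [B C']]; split; [|split]; simpl; apply smoothGc_mul; auto. Qed.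

Lemma smoothG3_opp a : smoothG3 a -> smoothG3 (fun p => C3opp (a p)).
Proof. intros [A [B C']]; split; [|split]; simpl; apply smoothGc_opp; auto. Qed.

Lemma smoothG3_zero : smoothG3 (fun _ => zero3).
Proof. repeat split; apply smoothG_const. Qed.

Lemma smoothG3_cross a m : smoothG3 a -> smoothG_R3 Gam m -> smoothG3 (fun p => C3cross (a p) (m p)).
Proof.
  intros [A [B C']] [N1 [N2 N3]].
  split; [|split]; simpl; apply smoothGc_add; try apply smoothGc_opp; apply smoothGc_mul; auto;
    apply smoothGc_RC; auto.
Qed.

Lemma smoothG3_realC3 m : smoothG_R3 Gam m -> smoothG3 (fun p => realC3 (m p)).
Proof. intros [N1 [N2 N3]]; repeat split; simpl; auto; apply smoothG_const. Qed.

Lemma smoothGc_dotn a m : smoothG3 a -> smoothG_R3 Gam m -> smoothGc (fun p => dotn (a p) (m p)).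
Proof.
  intros [A [B C']] [M1 [M2 M3]]. unfold dotn.
  apply smoothGc_add; [apply smoothGc_add|]; apply smoothGc_mul; auto; apply smoothGc_RC; auto.
Qed.

Lemma smoothG3_Nproj a m : smoothG3 a -> smoothG_R3 Gam m -> smoothG3 (fun p => Nproj (m p) (a p)).
Proof.
  intros; unfold Nproj; apply smoothG3_scal.
  - apply smoothGc_dotn; auto.
  - apply smoothG3_realC3; auto.
Qed.

Lemma smoothG_R3_rcross a b : smoothG_R3 Gam a -> smoothG_R3 Gam b ->
  smoothG_R3 Gam (fun p => rcross (a p) (b p)).
Proof.
  intros [A1 [A2 A3]] [B1 [B2 B3]]. unfold rcross; cbn [x1 x2 x3].
  split; [|split]; apply smoothG_plus; try apply smoothG_opp; apply smoothG_mult; auto.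
Qed.

Lemma smoothGR3_of_smoothG3 a : smoothG3 a -> smoothGR3 (fun p _ => a p).
Proof.
  intros [[A1 A2] [[B1 B2] [C1 C2]]];
  repeat split; apply smoothGR_of_smoothG; auto.
Qed.

Lemma smoothGR3_add a b : smoothGR3 a -> smoothGR3 b -> smoothGR3 (fun p e => C3add (a p e) (b p e)).
Proof.
  intros [[A1 A2] [[B1 B2] [C1 C2]]] [[D1 D2] [[E1 E2] [F1 F2]]];
  repeat split; simpl; apply smoothGR_plus; auto.
Qed.

Lemma smoothGRc_mul z w : smoothGRc z -> smoothGRc w -> smoothGRc (fun p e => Cmul (z p e) (w p e)).
Proof.
  intros [A B] [C' D]; split; simpl.
  - apply smoothGR_plus; [apply smoothGR_mult; auto|].
    apply smoothGR_ext with (fun p e => (-1) * (im (z p e) * im (w p e))).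
    + apply smoothGR_mult; [apply smoothGR_const|apply smoothGR_mult; auto].
    + intros; ring.
  - apply smoothGR_plus; apply smoothGR_mult; auto.
Qed.

Lemma smoothGR3_scal z a : smoothGRc z -> smoothGR3 a -> smoothGR3 (fun p e => C3scal (z p e) (a p e)).
Proof. intros Z [A [B C']]; split; [|split]; simpl; apply smoothGRc_mul; auto. Qed.

Lemma smoothGRc_RCpow j : smoothGRc (fun _ e => RC (e ^ j)).
Proof. split; simpl. apply smoothGR_pow. apply smoothGR_const. Qed.

End SmoothOnGamma.

Definition CD (f : R -> C) x (l : C) :=
  derivable_pt_lim (fun t => re (f t)) x (re l) /\ derivable_pt_lim (fun t => im (f t)) x (im l).
Definition C3D (f : R -> C3) x (l : C3) :=
  CD (fun t => c1 (f t)) x (c1 l) /\ CD (fun t => c2 (f t)) x (c2 l) /\ CD (fun t => c3 (f t)) x (c3 l).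

Lemma CD_ext f g x l l' : CD f x l -> (forall t, f t = g t) -> l = l' -> CD g x l'.
Proof.
  intros [A B] E L; subst l'; split.
  - apply (deriv_ext _ _ _ _ _ A); [intros; cbv beta; rewrite E; auto|reflexivity].
  - apply (deriv_ext _ _ _ _ _ B); [intros; cbv beta; rewrite E; auto|reflexivity].
Qed.

Lemma C3D_ext f g x l l' : C3D f x l -> (forall t, f t = g t) -> l = l' -> C3D g x l'.
Proof.
  intros [A [B C']] E L; subst l'; split; [|split];
  [eapply CD_ext; [apply A| |reflexivity]|eapply CD_ext; [apply B| |reflexivity]
  |eapply CD_ext; [apply C'| |reflexivity]]; intros; cbv beta; rewrite E; auto.
Qed.

Lemma CD_add f g x lf lg : CD f x lf -> CD g x lg -> CD (fun t => Cadd (f t) (g t)) x (Cadd lf lg).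
Proof. intros [A B] [C' D]; split; cx; apply (deriv_plus (fun t => _) (fun t => _)); auto. Qed.

Lemma CD_mul f g x lf lg : CD f x lf -> CD g x lg ->
  CD (fun t => Cmul (f t) (g t)) x (Cadd (Cmul lf (g x)) (Cmul (f x) lg)).
Proof.
  intros [A B] [C' D]; split; cx.
  - refine (deriv_ext _ _ _ _ _ (deriv_plus _ _ _ _ _ (deriv_mult _ _ _ _ _ A C')
      (deriv_scal (-1) _ _ _ (deriv_mult _ _ _ _ _ B D))) _ _); intros; ring.
  - refine (deriv_ext _ _ _ _ _ (deriv_plus _ _ _ _ _ (deriv_mult _ _ _ _ _ A D)
      (deriv_mult _ _ _ _ _ B C')) _ _); intros; ring.
Qed.

Lemma CD_const z x : CD (fun _ => z) x (RC 0).
Proof. split; apply deriv_const. Qed.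

Lemma CD_RCpow j x : CD (fun t => RC (t ^ j)) x (RC (INR j * x ^ pred j)).
Proof. split; cx. apply derivable_pt_lim_pow. apply deriv_const. Qed.

Lemma CD_mulc f z x l : CD f x l -> CD (fun t => Cmul (f t) z) x (Cmul l z).
Proof.
  intros H. eapply CD_ext. apply (CD_mul f (fun _ => z)); [apply H|apply CD_const].
  intros; reflexivity. ceq; ring.
Qed.

Lemma CD_opp f x l : CD f x l -> CD (fun t => Copp (f t)) x (Copp l).
Proof.
  intros H. eapply CD_ext. apply (CD_mulc f (RC (-1))); apply H.
  intros; ceq; ring. ceq; ring.
Qed.

Lemma C3D_add f g x lf lg : C3D f x lf -> C3D g x lg -> C3D (fun t => C3add (f t) (g t)) x (C3add lf lg).
Proof.
  intros [A [B C']] [D [E F]]; split; [|split]; cx; apply (CD_add (fun t => _) (fun t => _)); auto.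
Qed.

Lemma C3D_scal z a x lz la : CD z x lz -> C3D a x la ->
  C3D (fun t => C3scal (z t) (a t)) x (C3add (C3scal lz (a x)) (C3scal (z x) la)).
Proof. intros Z [A [B C']]; split; [|split]; cx; apply (CD_mul (fun t => _) (fun t => _)); auto. Qed.

Lemma C3D_const a x : C3D (fun _ => a) x (C3scal (RC 0) a).
Proof.
  split; [|split]; cx; (eapply CD_ext; [apply CD_const| intros; reflexivity|]); ceq; ring.
Qed.

Lemma C3D_opp f x l : C3D f x l -> C3D (fun t => C3opp (f t)) x (C3opp l).
Proof.
  intros H. eapply C3D_ext. apply (C3D_scal (fun _ => RC (-1))). apply CD_const. apply H.
  intros; c3eq; ring. c3eq; ring.
Qed.

Lemma C3D_cross a x la m : C3D a x la -> C3D (fun t => C3cross (a t) m) x (C3cross la m).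
Proof.
  intros [A [B C']]; split; [|split]; cx; apply (CD_add (fun t => _) (fun t => _));
  try apply (CD_opp (fun t => _)); apply (CD_mulc (fun t => _)); auto.
Qed.

Lemma CD_dotn f x l m : C3D f x l -> CD (fun s => dotn (f s) m) x (dotn l m).
Proof.
  intros [A [B C']]. unfold dotn.
  apply (CD_add (fun t => _) (fun t => _)); [apply (CD_add (fun t => _) (fun t => _))|];
  apply (CD_mulc (fun t => _)); auto.
Qed.

Lemma C3D_cproj f x l : C3D f x l -> forall j, derivable_pt_lim (fun t => cproj j (f t)) x (cproj j l).
Proof.
  intros [[A1 A2] [[B1 B2] [C1 C2]]] j. do 5 (destruct j as [|j]; [assumption|]). assumption.
Qed.

Lemma cproj_C3D f x l : (forall j, derivable_pt_lim (fun t => cproj j (f t)) x (cproj j l)) -> C3D f x l.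
Proof.
  intros H. split; [|split]; split;
  [apply (H 0%nat)|apply (H 1%nat)|apply (H 2%nat)|apply (H 3%nat)|apply (H 4%nat)|apply (H 5%nat)].
Qed.

Definition Ccont (z : R -> C) :=
  forall t, continuity_pt (fun s => re (z s)) t /\ continuity_pt (fun s => im (z s)) t.
Definition C3cont (f : R -> C3) :=
  Ccont (fun s => c1 (f s)) /\ Ccont (fun s => c2 (f s)) /\ Ccont (fun s => c3 (f s)).

Lemma Ccont_add z w : Ccont z -> Ccont w -> Ccont (fun t => Cadd (z t) (w t)).
Proof. intros A B t; destruct (A t), (B t); split; cx; apply cont_plus; auto. Qed.

Lemma Ccont_mul z w : Ccont z -> Ccont w -> Ccont (fun t => Cmul (z t) (w t)).
Proof.
  intros A B t; destruct (A t), (B t); split; cx.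
  - apply cont_minus; apply cont_mult; auto.
  - apply cont_plus; apply cont_mult; auto.
Qed.

Lemma Ccont_const z : Ccont (fun _ => z).
Proof. intros t; split; apply cont_const. Qed.

Lemma Ccont_of_CD z : (forall t, exists l, CD z t l) -> Ccont z.
Proof.
  intros H t; destruct (H t) as [l [A B]]; split; apply derivable_continuous_pt; eexists; eauto.
Qed.

Lemma Ccont_opp z : Ccont z -> Ccont (fun t => Copp (z t)).
Proof.
  intros A t; destruct (A t) as [A1 A2]; split; cx;
  [eapply cont_ext; [apply (cont_mult (fun _ => -1)); [apply cont_const|apply A1]|]
  |eapply cont_ext; [apply (cont_mult (fun _ => -1)); [apply cont_const|apply A2]|]];
  intros; cbv beta; ring.
Qed.

Lemma C3cont_add f g : C3cont f -> C3cont g -> C3cont (fun t => C3add (f t) (g t)).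
Proof.
  intros [A [B C']] [D [E F]]; split; [|split]; cx; apply (Ccont_add (fun t => _) (fun t => _)); auto.
Qed.

Lemma C3cont_scal z f : Ccont z -> C3cont f -> C3cont (fun t => C3scal (z t) (f t)).
Proof.
  intros Z [A [B C']]; split; [|split]; cx; apply (Ccont_mul (fun t => _) (fun t => _)); auto.
Qed.

Lemma C3cont_opp f : C3cont f -> C3cont (fun t => C3opp (f t)).
Proof. intros [A [B C']]; split; [|split]; cx; apply (Ccont_opp (fun t => _)); auto. Qed.

Lemma C3cont_cross f m : C3cont f -> C3cont (fun t => C3cross (f t) m).
Proof.
  intros [A [B C']]; split; [|split]; cx; apply (Ccont_add (fun t => _) (fun t => _));
  try apply (Ccont_opp (fun t => _));
  apply (Ccont_mul (fun t => _) (fun t => _)); auto; apply Ccont_const.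
Qed.

Lemma C3cont_of_C3D f : (forall t, exists l, C3D f t l) -> C3cont f.
Proof.
  intros H; split; [|split]; apply Ccont_of_CD; intros t; destruct (H t) as [l [A [B C']]]; eauto.
Qed.

Lemma Ccont_dotn f m : C3cont f -> Ccont (fun s => dotn (f s) m).
Proof.
  intros [A [B C']]. unfold dotn.
  apply (Ccont_add (fun t => _) (fun t => _)); [apply (Ccont_add (fun t => _) (fun t => _))|];
  apply (Ccont_mul (fun t => _) (fun t => _)); auto; apply Ccont_const.
Qed.

Lemma C3cont_norm2 f : C3cont f -> forall t, continuity_pt (fun s => C3norm2 (f s)) t.
Proof.
  intros [A [B C']] t. destruct (A t), (B t), (C' t). unfold C3norm2.
  assert (Sq : forall g, continuity_pt g t -> continuity_pt (fun s => g s ^ 2) t).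
  { intros g Hg. eapply cont_ext; [apply (cont_mult g g); auto|]. intros; simpl; ring. }
  repeat apply cont_plus; apply Sq; auto.
Qed.

Lemma C3cont_vanishing_at0 Z : C3cont Z -> (forall t, 0 < t -> Z t = zero3) -> Z 0 = zero3.
Proof.
  intros [A [B C']] HZ. unfold zero3.
  c3eq;
  [ apply (cont_vanishing_at0 (fun s => re (c1 (Z s)))); [apply (proj1 (A 0))|]
  | apply (cont_vanishing_at0 (fun s => im (c1 (Z s)))); [apply (proj2 (A 0))|]
  | apply (cont_vanishing_at0 (fun s => re (c2 (Z s)))); [apply (proj1 (B 0))|]
  | apply (cont_vanishing_at0 (fun s => im (c2 (Z s)))); [apply (proj2 (B 0))|]
  | apply (cont_vanishing_at0 (fun s => re (c3 (Z s)))); [apply (proj1 (C' 0))|]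
  | apply (cont_vanishing_at0 (fun s => im (c3 (Z s)))); [apply (proj2 (C' 0))|] ];
  intros s Hs; rewrite HZ; auto.
Qed.

(** * The complex exponential t |-> e^(lam t) *)

Definition Cexpl (lam : C) (t : R) : C := Cexp (Cmul (RC t) lam).

Lemma Cexpl_eq lam t :
  Cexpl lam t = mkC (damped_wave (re lam) (im lam) 1 0 t) (damped_wave (re lam) (im lam) 0 1 t).
Proof.
  unfold Cexpl, Cexp, damped_wave. cx.
  replace (t * re lam - 0 * im lam) with (re lam * t) by ring.
  replace (t * im lam + 0 * re lam) with (im lam * t) by ring.
  f_equal; ring.
Qed.

Lemma CD_Cexpl lam x : CD (Cexpl lam) x (Cmul lam (Cexpl lam x)).
Proof.
  eapply CD_ext with (f := fun t => mkC (damped_wave (re lam) (im lam) 1 0 t)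
                                        (damped_wave (re lam) (im lam) 0 1 t)).
  2: { intros; rewrite Cexpl_eq; auto. }
  2: { rewrite Cexpl_eq. reflexivity. }
  split; cx; (eapply deriv_ext; [apply deriv_damped_wave| intros; reflexivity|]);
    unfold damped_wave; ring.
Qed.

Lemma Cexpl_0 lam : Cexpl lam 0 = RC 1.
Proof. rewrite Cexpl_eq. unfold damped_wave. rewrite !Rmult_0_r, exp_0, cos_0, sin_0. ceq; ring. Qed.

Lemma Cexpl_modulus lam t :
  re (Cexpl lam t) ^ 2 + im (Cexpl lam t) ^ 2 = exp (2 * re lam * t).
Proof.
  rewrite Cexpl_eq; cbn [re im]. unfold damped_wave.
  replace (2 * re lam * t) with (re lam * t + re lam * t) by ring. rewrite exp_plus.
  assert (H := sin2_cos2 (im lam * t)). unfold Rsqr in H.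
  transitivity (exp (re lam * t) * exp (re lam * t) *
    (sin (im lam * t) * sin (im lam * t) + cos (im lam * t) * cos (im lam * t))); [ring|].
  rewrite H; ring.
Qed.

Lemma Cexpl_inv lam t : Cmul (Cexpl lam t) (Cexpl (Copp lam) t) = RC 1.
Proof.
  rewrite !Cexpl_eq. unfold damped_wave. cx.
  replace (- re lam * t) with (- (re lam * t)) by ring.
  replace (- im lam * t) with (- (im lam * t)) by ring.
  rewrite cos_neg, sin_neg. assert (H := sin2_cos2 (im lam * t)). unfold Rsqr in H.
  assert (E : exp (re lam * t) * exp (- (re lam * t)) = 1).
  { rewrite <- exp_plus. replace (re lam * t + - (re lam * t)) with 0 by ring. apply exp_0. }
  ceq.
  - transitivity ((exp (re lam * t) * exp (- (re lam * t))) *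
      (sin (im lam * t) * sin (im lam * t) + cos (im lam * t) * cos (im lam * t))); [ring|].
    rewrite E, H; ring.
  - ring.
Qed.

Lemma Edecay_Cexpl t : Edecay t = Cexpl (Copp sqrti) t.
Proof. unfold Edecay, Cexpl. f_equal. ceq; ring. Qed.

Lemma CD_Edecay x : CD Edecay x (Cmul (Copp sqrti) (Edecay x)).
Proof.
  eapply CD_ext; [apply CD_Cexpl| |]; intros; rewrite ?Edecay_Cexpl; reflexivity.
Qed.

Lemma Edecay_0 : Edecay 0 = RC 1.
Proof. rewrite Edecay_Cexpl. apply Cexpl_0. Qed.

Lemma Edecay_modulus e : re (Edecay e) ^ 2 + im (Edecay e) ^ 2 = exp (- (2 * r2) * e).
Proof. rewrite Edecay_Cexpl, Cexpl_modulus, sqrti_eq. cx. f_equal; ring. Qed.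

Lemma smoothGRc_Edecay Gam : smoothGRc Gam (fun _ e => Edecay e).
Proof.
  split; (eapply smoothGR_ext; [apply smoothGR_damped_wave|]); intros;
    rewrite Edecay_Cexpl, Cexpl_eq; reflexivity.
Qed.

(** * First-order linear ODEs *)

Lemma const_of_deriv_zero (g : R -> R) t : 0 <= t -> (forall x, continuity_pt g x) ->
  (forall x, 0 < x -> derivable_pt_lim g x 0) -> g t = g 0.
Proof.
  intros [Ht| <-] Hg Hd; [|reflexivity].
  assert (pr : forall x, 0 < x < t -> derivable_pt g x) by (intros x Hx; exists 0; apply Hd; lra).
  apply (null_derivative_loc g 0 t pr (fun x _ => Hg x)); [|lra].
  intros x P. apply derive_pt_eq_0. apply Hd; lra.
Qed.

Lemma C3_const_of_deriv_zero (K : R -> C3) t : 0 <= t -> C3cont K ->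
  (forall x, 0 < x -> C3D K x zero3) -> K t = K 0.
Proof.
  intros Ht [A [B C']] HD.
  c3eq;
  [ apply (const_of_deriv_zero (fun s => re (c1 (K s))))
  | apply (const_of_deriv_zero (fun s => im (c1 (K s))))
  | apply (const_of_deriv_zero (fun s => re (c2 (K s))))
  | apply (const_of_deriv_zero (fun s => im (c2 (K s))))
  | apply (const_of_deriv_zero (fun s => re (c3 (K s))))
  | apply (const_of_deriv_zero (fun s => im (c3 (K s)))) ]; auto; intros x;
  first [ apply (proj1 (A x)) | apply (proj2 (A x)) | apply (proj1 (B x)) | apply (proj2 (B x))
        | apply (proj1 (C' x)) | apply (proj2 (C' x))
        | intros Hx; destruct (HD x Hx) as [[Z1 Z2] [[Z3 Z4] [Z5 Z6]]]; assumption ].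
Qed.

(* h' = lam h on (0, oo) and h continuous give h(t) = e^(lam t) h(0) on [0, oo):
   the curve e^(-lam t) h(t) has zero derivative. *)
Lemma linear_ode_solution (h : R -> C3) (lam : C) : C3cont h ->
  (forall t, 0 < t -> C3D h t (C3scal lam (h t))) ->
  forall t, 0 <= t -> h t = C3scal (Cexpl lam t) (h 0).
Proof.
  intros Hc HD t Ht.
  set (K := fun t => C3scal (Cexpl (Copp lam) t) (h t)).
  assert (KD : forall t, 0 < t -> C3D K t zero3).
  { intros s Hs. eapply C3D_ext. apply C3D_scal. apply CD_Cexpl. apply HD; auto.
    intros; reflexivity. unfold zero3; c3eq; ring. }
  assert (KC : C3cont K).
  { apply C3cont_scal; auto. apply Ccont_of_CD; intros; eexists; apply CD_Cexpl. }
  assert (E := C3_const_of_deriv_zero K t Ht KC KD). unfold K in E. rewrite Cexpl_0 in E.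
  assert (Inv := Cexpl_inv lam t).
  transitivity (C3scal (Cmul (Cexpl lam t) (Cexpl (Copp lam) t)) (h t)).
  - rewrite Inv. c3eq; ring.
  - transitivity (C3scal (Cexpl lam t) (C3scal (Cexpl (Copp lam) t) (h t))); [c3eq; ring|].
    rewrite E. c3eq; ring.
Qed.

Lemma C3poly_add b1 b2 p t m :
  C3poly (fun j q => C3add (b1 j q) (b2 j q)) p t m = C3add (C3poly b1 p t m) (C3poly b2 p t m).
Proof. induction m; simpl; auto. rewrite IHm. c3eq; ring. Qed.

Lemma C3poly_scal z b p t m : C3poly (fun j q => C3scal z (b j q)) p t m = C3scal z (C3poly b p t m).
Proof. induction m; simpl; auto. rewrite IHm. c3eq; ring. Qed.

Lemma C3poly_linear (Lm : R3 -> C3 -> C3)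
  (Hadd : forall q a b, Lm q (C3add a b) = C3add (Lm q a) (Lm q b))
  (Hsc : forall q x a, Lm q (C3scal (RC x) a) = C3scal (RC x) (Lm q a)) b p t m :
  C3poly (fun j q => Lm q (b j q)) p t m = Lm p (C3poly b p t m).
Proof. induction m; simpl; auto. rewrite Hadd, Hsc, IHm; auto. Qed.

Lemma C3poly_ext b b' p t m : (forall j, (j <= m)%nat -> b j p = b' j p) ->
  C3poly b p t m = C3poly b' p t m.
Proof. induction m; intros H; simpl. apply H; lia. rewrite IHm, H; auto. Qed.

Definition vanishes_above (m : nat) (b : nat -> R3 -> C3) (p : R3) : Prop :=
  forall j, (m < j)%nat -> b j p = zero3.

Lemma C3poly_truncate b p t k m : (k <= m)%nat -> vanishes_above k b p ->
  C3poly b p t m = C3poly b p t k.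
Proof.
  intros Hk H. induction m. replace k with 0%nat by lia; auto.
  destruct (Nat.eq_dec k (S m)) as [->|Hne]; auto.
  simpl. rewrite IHm by lia. rewrite H by lia. unfold zero3; c3eq; ring.
Qed.

Lemma C3poly_at0 b p m : C3poly b p 0 m = b 0%nat p.
Proof. induction m; simpl; auto. rewrite IHm. c3eq; ring. Qed.

(* Coefficients of the eta-derivative, and of the operator P |-> P' - sqrt i P,
   which is the derivative of e^(-sqrt i eta) P up to the factor e^(-sqrt i eta). *)
Definition Dseq (b : nat -> R3 -> C3) (j : nat) (p : R3) : C3 := C3scal (RC (INR (S j))) (b (S j) p).
Definition Lseq (b : nat -> R3 -> C3) (j : nat) (p : R3) : C3 :=
  C3add (Dseq b j p) (C3scal (Copp sqrti) (b j p)).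

Lemma C3D_poly b p x m : C3D (fun t => C3poly b p t (S m)) x (C3poly (Dseq b) p x m).
Proof.
  induction m.
  - cbn [C3poly]. eapply C3D_ext.
    + apply C3D_add. apply C3D_const. apply C3D_scal. apply CD_RCpow. apply C3D_const.
    + intros; reflexivity.
    + unfold Dseq. c3eq; simpl; ring.
  - change (C3D (fun t => C3add (C3poly b p t (S m)) (C3scal (RC (t ^ S (S m))) (b (S (S m)) p))) x
      (C3add (C3poly (Dseq b) p x m) (C3scal (RC (x ^ S m)) (Dseq b (S m) p)))).
    eapply C3D_ext.
    + apply C3D_add. apply IHm. apply C3D_scal. apply CD_RCpow. apply C3D_const.
    + intros; reflexivity.
    + unfold Dseq. c3eq; cbn [pred]; ring.
Qed.

Lemma C3poly_Lseq b p x k : vanishes_above (S k) b p ->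
  C3poly (Lseq b) p x (S k) = C3add (C3poly (Dseq b) p x k) (C3scal (Copp sqrti) (C3poly b p x (S k))).
Proof.
  intros Hb. unfold Lseq. rewrite C3poly_add, C3poly_scal.
  rewrite (C3poly_truncate (Dseq b) p x k (S k)); auto.
  intros j Hj; unfold Dseq; rewrite Hb by lia; unfold zero3; c3eq; ring.
Qed.

Definition ansatz (b : nat -> R3 -> C3) (k : nat) (p : R3) (e : R) : C3 :=
  C3scal (Edecay e) (C3poly b p e (S k)).

Lemma C3D_ansatz b k p x : vanishes_above (S k) b p ->
  C3D (fun t => ansatz b k p t) x (ansatz (Lseq b) k p x).
Proof.
  intros Hb. unfold ansatz. eapply C3D_ext.
  - apply C3D_scal. apply CD_Edecay. apply C3D_poly.
  - intros; reflexivity.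
  - rewrite C3poly_Lseq by auto. c3eq; ring.
Qed.

Lemma smoothGR3_poly Gam b m : (forall j, smoothG3 Gam (b j)) ->
  smoothGR3 Gam (fun p e => C3poly b p e m).
Proof.
  intros H. induction m; cbn [C3poly].
  - apply smoothGR3_of_smoothG3; auto.
  - apply smoothGR3_add; auto. apply smoothGR3_scal.
    + apply smoothGRc_RCpow.
    + apply smoothGR3_of_smoothG3; auto.
Qed.

Lemma smoothGR_C3_ansatz Gam b k : (forall j, smoothG3 Gam (b j)) ->
  smoothGR_C3 Gam (ansatz b k).
Proof.
  intros H. apply smoothGR3_C3. apply smoothGR3_scal.
  - apply smoothGRc_Edecay.
  - apply smoothGR3_poly; auto.
Qed.

(** * Square integrability on R^+ *)

Lemma exp_le a b : a <= b -> exp a <= exp b.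
Proof. intros [H| ->]; [left; apply exp_increasing; auto| right; auto]. Qed.

Lemma exp_ge1 a : 0 <= a -> 1 <= exp a.
Proof. intros; rewrite <- exp_0; apply exp_le; auto. Qed.

Lemma exp_pow y q : exp y ^ q = exp (INR q * y).
Proof.
  induction q. simpl; rewrite Rmult_0_l, exp_0; auto.
  rewrite S_INR. simpl. rewrite IHq, <- exp_plus. f_equal; ring.
Qed.

(* y^q <= q^q e^y, from y/q <= e^(y/q). *)
Lemma pow_le_exp y q : 0 <= y -> y ^ q <= INR q ^ q * exp y.
Proof.
  intros Hy. destruct q as [|q].
  - simpl. rewrite Rmult_1_l. apply exp_ge1; auto.
  - set (Q := INR (S q)). assert (HQ : 0 < Q) by (apply lt_0_INR; lia).
    assert (A : y / Q <= exp (y / Q)) by (assert (H := exp_ineq1_le (y / Q)); lra).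
    assert (B : (y / Q) ^ S q <= exp (y / Q) ^ S q).
    { apply pow_incr. split; auto. unfold Rdiv; apply Rmult_le_pos; [lra| left; apply Rinv_0_lt_compat; lra]. }
    rewrite exp_pow in B. fold Q in B. replace (Q * (y / Q)) with y in B by (field; lra).
    replace y with (Q * (y / Q)) at 1 by (field; lra). rewrite Rpow_mult_distr.
    apply Rmult_le_compat_l; auto. apply pow_le; lra.
Qed.

Lemma pow_le_exp_half q : exists K, 0 <= K /\ forall x, 0 <= x -> x ^ q <= K * exp (x / 2).
Proof.
  exists (2 ^ q * INR q ^ q). split.
  - apply Rmult_le_pos; apply pow_le; [lra| apply pos_INR].
  - intros x Hx. replace x with (2 * (x / 2)) at 1 by field. rewrite Rpow_mult_distr, Rmult_assoc.
    apply Rmult_le_compat_l. apply pow_le; lra. apply pow_le_exp; lra.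
Qed.

Lemma C3poly_growth b p m : exists C, 0 <= C /\
  forall e, 0 <= e -> C3norm2 (C3poly b p e m) <= C * exp (e / 2).
Proof.
  induction m.
  - exists (C3norm2 (b 0%nat p)). split. apply C3norm2_nonneg. intros e He. simpl.
    rewrite <- (Rmult_1_r (C3norm2 _)) at 1. apply Rmult_le_compat_l. apply C3norm2_nonneg.
    apply exp_ge1; lra.
  - destruct IHm as [C [HC H]]. destruct (pow_le_exp_half (2 * S m)) as [K [HK HKx]].
    assert (Hb := C3norm2_nonneg (b (S m) p)).
    exists (2 * C + 2 * (K * C3norm2 (b (S m) p))). split; [nra|].
    intros e He. cbn [C3poly]. eapply Rle_trans; [apply C3norm2_add|].
    rewrite C3norm2_scal. cx.
    assert (E1 := H e He).
    replace ((e ^ S m) ^ 2 + 0 ^ 2) with ((e ^ S m) ^ 2) by ring.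
    assert (E3 : (e ^ S m) ^ 2 <= K * exp (e / 2)) by (rewrite <- pow_mult, Nat.mul_comm; auto).
    assert (E4 : (e ^ S m) ^ 2 * C3norm2 (b (S m) p) <= K * exp (e / 2) * C3norm2 (b (S m) p))
      by (apply Rmult_le_compat_r; auto).
    lra.
Qed.

(* |e^(-sqrt i eta) P(eta)|^2 = e^(-sqrt 2 eta) |P(eta)|^2 = O(e^(-eta/2)). *)
Lemma ansatz_decay b k p : exists C, 0 <= C /\
  forall e, 0 <= e -> C3norm2 (ansatz b k p e) <= C * exp (- e / 2).
Proof.
  destruct (C3poly_growth b p (S k)) as [C [HC H]]. exists C; split; auto.
  intros e He. unfold ansatz. rewrite C3norm2_scal, Edecay_modulus.
  eapply Rle_trans. apply Rmult_le_compat_l. left; apply exp_pos. apply H; auto.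
  rewrite (Rmult_comm C), <- Rmult_assoc, <- exp_plus, Rmult_comm.
  apply Rmult_le_compat_l; auto. apply exp_le.
  assert (H2 := r2_ge_half). nra.
Qed.

Lemma finite_integral_add a b : finite_integral_R_plus a -> finite_integral_R_plus b ->
  finite_integral_R_plus (fun x => a x + b x).
Proof.
  intros [Ia [Ma Ba]] [Ib [Mb Bb]]. split.
  - intros T HT. destruct (Ia T HT) as [pa], (Ib T HT) as [pb].
    constructor. refine (Riemann_integrable_ext _ _ (RiemannInt_P10 1 pa pb)); intros; ring.
  - exists (Ma + Mb). intros T pr HT.
    destruct (Ia T HT) as [pa], (Ib T HT) as [pb].
    assert (E := RiemannInt_P13 pa pb (RiemannInt_P10 1 pa pb)).
    assert (L : RiemannInt pr <= RiemannInt (RiemannInt_P10 1 pa pb))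
      by (apply RiemannInt_P19; [lra| intros; lra]).
    assert (A1 := Ba T pa HT). assert (A2 := Bb T pb HT). lra.
Qed.

Lemma finite_integral_dominated h g : (forall x, continuity_pt h x) ->
  (forall t, 0 <= t -> h t <= g t) -> finite_integral_R_plus g -> finite_integral_R_plus h.
Proof.
  intros Hc Hhg [Ig [M Bg]]. split.
  - intros T HT. constructor. apply continuity_implies_RiemannInt; auto.
  - exists M. intros T pr HT. destruct (Ig T HT) as [pg].
    apply Rle_trans with (RiemannInt pg); auto.
    apply RiemannInt_P19; auto. intros x Hx. apply Hhg. lra.
Qed.

Lemma finite_integral_exp_decay C : 0 <= C -> finite_integral_R_plus (fun e => C * exp (- e / 2)).
Proof.
  intros HC.
  assert (D : forall K x, derivable_pt_lim (fun e => K * exp (- e / 2)) x (K * (- / 2 * exp (- x / 2)))).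
  { intros K x. apply (deriv_ext _ _ _ _ _ (deriv_scal K _ _ _ (deriv_exp_lin (- / 2) x))).
    - intros t; replace (- / 2 * t) with (- t / 2) by field; reflexivity.
    - replace (- / 2 * x) with (- x / 2) by field; reflexivity. }
  assert (Hc : forall x, continuity_pt (fun e => C * exp (- e / 2)) x)
    by (intros x; apply derivable_continuous_pt; eexists; apply D).
  split.
  - intros T HT. constructor. apply continuity_implies_RiemannInt; auto.
  - exists (2 * C). intros T pr HT.
    rewrite (RiemannInt_primitive _ (fun e => - 2 * C * exp (- e / 2)) 0 T pr HT); auto.
    + replace (- 0 / 2) with 0 by field. rewrite exp_0.
      assert (0 < exp (- T / 2)) by apply exp_pos. nra.
    + intros x. apply (deriv_ext _ _ _ _ _ (D (- 2 * C) x)); [intros; reflexivity| field].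
Qed.

Lemma finite_integral_ansatz b k p : vanishes_above (S k) b p ->
  finite_integral_R_plus (fun e => C3norm2 (ansatz b k p e)).
Proof.
  intros Hb. destruct (ansatz_decay b k p) as [C [HC HB]].
  apply finite_integral_dominated with (fun e => C * exp (- e / 2)); auto.
  - apply C3cont_norm2, C3cont_of_C3D. intros t; eexists; apply C3D_ansatz; auto.
  - apply finite_integral_exp_decay; auto.
Qed.

Lemma quadratic_lower_bound_not_integrable (G : R -> R) c : finite_integral_R_plus G ->
  (forall t, 0 <= t -> c * (t * t) <= G t) -> c <= 0.
Proof.
  intros [IG [M BG]] Hlow. destruct (Rle_lt_dec c 0) as [|Hc]; auto. exfalso.
  set (T := 3 * (Rabs M + 1) / c + 1).
  assert (HT : 1 <= T).
  { unfold T. assert (0 <= 3 * (Rabs M + 1) / c); [|lra].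
    apply Rmult_le_pos; [assert (H := Rabs_pos M); lra | left; apply Rinv_0_lt_compat; auto]. }
  destruct (IG T) as [pr]; [lra|].
  assert (Hq : forall x, continuity_pt (fun t => c * (t * t)) x).
  { intros x. apply cont_mult. apply cont_const.
    apply cont_mult; apply derivable_continuous_pt; eexists; apply deriv_id. }
  assert (pq : Riemann_integrable (fun t => c * (t * t)) 0 T)
    by (apply continuity_implies_RiemannInt; [lra| auto]).
  assert (I1 : RiemannInt pq <= RiemannInt pr)
    by (apply RiemannInt_P19; [lra|]; intros; apply Hlow; lra).
  assert (I2 : RiemannInt pq = c * (T * T * T) / 3 - c * (0 * 0 * 0) / 3).
  { apply (RiemannInt_primitive _ (fun t => c * (t * t * t) / 3)); [lra| |auto].
    intros x.
    refine (deriv_ext _ _ _ _ _ (deriv_scal (c / 3) _ x _ (deriv_mult _ _ x _ _ (deriv_id x)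
      (deriv_mult _ _ x _ _ (deriv_id x) (deriv_id x)))) _ _); intros; cbv beta; field. }
  assert (I3 := BG T pr ltac:(lra)).
  assert (E : c * T = 3 * (Rabs M + 1) + c) by (unfold T; field; lra).
  assert (T1 : T <= T * T * T) by nra.
  assert (c * T <= c * (T * T * T)) by (apply Rmult_le_compat_l; lra).
  assert (HMa := Rle_abs M). lra.
Qed.

(** * The coefficient recursion *)

Definition inv_2sqrti : C := mkC (/ (4 * r2)) (- / (4 * r2)).

Lemma inv_2sqrti_spec : Cmul (Cmul (RC 2) sqrti) inv_2sqrti = RC 1.
Proof. rewrite sqrti_eq; unfold inv_2sqrti. assert (H := r2_pos). ceq; field; lra. Qed.

(* Backward solution of 2 sqrt i w_j - (j+1) w_(j+1) = R_j for j <= k, with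
   w_j = 0 for j > k: [back_solve k R m] is w_(k+1-m). *)
Fixpoint back_solve (k : nat) (R : nat -> R3 -> C3) (m : nat) (p : R3) : C3 :=
  match m with
  | O => zero3
  | S m' => C3scal inv_2sqrti
      (C3add (R (k - m')%nat p) (C3scal (RC (INR (k + 1 - m'))) (back_solve k R m' p)))
  end.

Definition wseq (k : nat) (R : nat -> R3 -> C3) (j : nat) (p : R3) : C3 :=
  if Nat.leb j k then back_solve k R (S (k - j)) p else zero3.

Lemma wseq_vanishes_above k R p : vanishes_above k (wseq k R) p.
Proof. intros j H; unfold wseq. destruct (Nat.leb_spec j k); auto; lia. Qed.

Lemma wseq_recursion k R p j : vanishes_above k R p ->
  C3add (C3scal (Cmul (RC 2) sqrti) (wseq k R j p)) (C3scal (RC (- INR (S j))) (wseq k R (S j) p))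
  = R j p.
Proof.
  intros HR. unfold wseq.
  destruct (Nat.leb_spec j k) as [Hj|Hj].
  - assert (E : (if Nat.leb (S j) k then back_solve k R (S (k - S j)) p else zero3)
                = back_solve k R (k - j) p).
    { destruct (Nat.leb_spec (S j) k).
      - replace (k - j)%nat with (S (k - S j)) by lia. auto.
      - replace (k - j)%nat with 0%nat by lia. reflexivity. }
    rewrite E. cbn [back_solve]. replace (k - (k - j))%nat with j by lia.
    replace (k + 1 - (k - j))%nat with (S j) by lia.
    set (W := back_solve k R (k - j) p). set (Rj := R j p).
    assert (H := inv_2sqrti_spec). revert H. rewrite sqrti_eq; unfold inv_2sqrti. intros H.
    assert (H0 := r2_pos). c3eq; field; lra.
  - destruct (Nat.leb_spec (S j) k); [lia|]. rewrite HR by lia. unfold zero3; c3eq; ring.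
Qed.

(* Tangential vectors span a subspace stable under the operations of the recursion. *)
Lemma back_solve_tangential k R m p n0 : (forall j, dotn (R j p) n0 = RC 0) ->
  dotn (back_solve k R m p) n0 = RC 0.
Proof.
  intros HR. induction m; cbn [back_solve].
  - unfold zero3, dotn; ceq; ring.
  - rewrite dotn_scal, dotn_add, dotn_scal, IHm, HR. ceq; ring.
Qed.

Lemma wseq_tangential k R j p n0 : (forall j, dotn (R j p) n0 = RC 0) ->
  dotn (wseq k R j p) n0 = RC 0.
Proof.
  intros HR. unfold wseq. destruct (Nat.leb j k).
  - apply back_solve_tangential; auto.
  - unfold zero3, dotn; ceq; ring.
Qed.

(* With P_j = om N(f_j) + t_j and Q_j = -(i/om) (g_j + (L t)_j x n) the second
   equation -(L P)_j x n + i om Q_j = g_j holds, whatever t is: the normal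
   parts N(f) do not contribute to (L P) x n. *)
Lemma second_equation_coef om n0 (f0 f1 t0 t1 g0 : C3) (J : R) : om <> 0 ->
  let P0 := C3add (C3scal (RC om) (Nproj n0 f0)) t0 in
  let P1 := C3add (C3scal (RC om) (Nproj n0 f1)) t1 in
  let LP := C3add (C3scal (RC J) P1) (C3scal (Copp sqrti) P0) in
  let Lt := C3add (C3scal (RC J) t1) (C3scal (Copp sqrti) t0) in
  C3add (C3opp (C3cross LP n0))
        (C3scal (mkC 0 om) (C3scal (mkC 0 (- / om)) (C3add g0 (C3cross Lt n0)))) = g0.
Proof. intros Hom. simpl. unfold Nproj, dotn. c3eq; field; auto. Qed.

(* The first equation (L Q)_j x n + P_j / om = f_j reduces, for tangential
   t_j, w_j, w_(j+1) with t_(j+1) = w_j / (j+1) and t_(j+2) = w_(j+1) / (j+2),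
   to the recursion 2 sqrt i w_j - (j+1) w_(j+1) = R_j with
   R_j = i om (f_j - N(f_j)) - (L g)_j x n. *)
Lemma first_equation_coef (n0 : R3) (om J J2 : R) (f g0 g1 t0 w0 w1 : C3) :
  dot n0 n0 = 1 -> om <> 0 -> J <> 0 -> J2 <> 0 ->
  dotn t0 n0 = RC 0 -> dotn w0 n0 = RC 0 -> dotn w1 n0 = RC 0 ->
  C3add (C3scal (Cmul (RC 2) sqrti) w0) (C3scal (RC (- J)) w1) =
    C3add (C3scal (mkC 0 om) (C3add f (C3opp (Nproj n0 f))))
      (C3opp (C3cross (C3add (C3scal (RC J) g1) (C3scal (Copp sqrti) g0)) n0)) ->
  let t1 := C3scal (RC (/ J)) w0 in
  let t2 := C3scal (RC (/ J2)) w1 in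
  let Lt0 := C3add (C3scal (RC J) t1) (C3scal (Copp sqrti) t0) in
  let Lt1 := C3add (C3scal (RC J2) t2) (C3scal (Copp sqrti) t1) in
  let Q0 := C3scal (mkC 0 (- / om)) (C3add g0 (C3cross Lt0 n0)) in
  let Q1 := C3scal (mkC 0 (- / om)) (C3add g1 (C3cross Lt1 n0)) in
  C3add (C3cross (C3add (C3scal (RC J) Q1) (C3scal (Copp sqrti) Q0)) n0)
    (C3scal (RC (1 / om)) (C3add (C3scal (RC om) (Nproj n0 f)) t0)) = f.
Proof.
  intros Hn Hom HJ HJ2 Ht0 Hw0 Hw1 HW t1 t2 Lt0 Lt1 Q0 Q1.
  (* LL = (L (L t))_j, a tangential vector *)
  set (LL := C3add (C3add (C3scal (RC J) w1) (C3scal (Copp (Cmul (RC 2) sqrti)) w0))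
                   (C3scal (mkC 0 1) t0)).
  assert (HLL : C3add (C3scal (RC J) Lt1) (C3scal (Copp sqrti) Lt0) = LL).
  { unfold LL, Lt0, Lt1, t1, t2. rewrite sqrti_eq.
    assert (Hs : 2 * r2 * r2 = 1) by (rewrite Rmult_assoc, r2_sq; field).
    set (Ji := / J). set (J2i := / J2).
    assert (E2 : J * Ji = 1) by (unfold Ji; field; auto).
    assert (E3 : J2 * J2i = 1) by (unfold J2i; field; auto).
    clearbody Ji J2i.
    destruct t0 as [[a1 a2] [a3 a4] [a5 a6]]; destruct w0 as [[u1 u2] [u3 u4] [u5 u6]];
    destruct w1 as [[v1 v2] [v3 v4] [v5 v6]].
    c3eq; nsatz. }
  assert (Htan : dotn LL n0 = RC 0).
  { unfold LL, dotn in *. rewrite sqrti_eq.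
    injection Ht0; injection Hw0; injection Hw1; cx; clear Ht0 Hw0 Hw1; intros.
    ceq; nsatz. }
  assert (HQ : C3add (C3scal (RC J) Q1) (C3scal (Copp sqrti) Q0) =
    C3scal (mkC 0 (- / om)) (C3add (C3add (C3scal (RC J) g1) (C3scal (Copp sqrti) g0))
       (C3cross (C3add (C3scal (RC J) Lt1) (C3scal (Copp sqrti) Lt0)) n0))).
  { unfold Q0, Q1. c3eq; ring. }
  rewrite HQ, HLL.
  set (Lg := C3add (C3scal (RC J) g1) (C3scal (Copp sqrti) g0)) in *.
  assert (HC : C3cross (C3scal (mkC 0 (- / om)) (C3add Lg (C3cross LL n0))) n0 =
    C3scal (mkC 0 (- / om)) (C3add (C3cross Lg n0) (C3cross (C3cross LL n0) n0))).
  { c3eq; ring. }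
  rewrite HC, (cross_cross_tangential LL n0 Hn Htan).
  assert (HO : C3opp LL = C3add (C3add (C3scal (Cmul (RC 2) sqrti) w0) (C3scal (RC (- J)) w1))
                                (C3scal (mkC 0 (-1)) t0)).
  { unfold LL. c3eq; ring. }
  rewrite HO, HW. clearbody Lg. unfold Nproj, dotn. c3eq; field; auto.
Qed.

Definition zext (k : nat) (a : nat -> R3 -> C3) (j : nat) (p : R3) : C3 :=
  if Nat.leb j k then a j p else zero3.

Lemma zext_vanishes_above k a p : vanishes_above k (zext k a) p.
Proof. intros j H; unfold zext. destruct (Nat.leb_spec j k); auto; lia. Qed.

Lemma zext_low k a j p : (j <= k)%nat -> zext k a j p = a j p.
Proof. intros H; unfold zext. destruct (Nat.leb_spec j k); auto; lia. Qed.

Lemma C3poly_zext k a p e : C3poly (zext k a) p e (S k) = C3poly a p e k.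
Proof.
  rewrite (C3poly_truncate _ p e k (S k)); auto using zext_vanishes_above.
  apply C3poly_ext; intros; apply zext_low; auto.
Qed.

Section Coefficients.
Variables (Gam : R3 -> Prop) (n : R3 -> R3) (om : R) (k : nat) (af ag : nat -> R3 -> C3)
          (phi : R3 -> R3).
Hypothesis Hn : forall p, Gam p -> dot (n p) (n p) = 1.
Hypothesis Hom : om <> 0.
Hypothesis Hphi : forall p, Gam p -> dot (phi p) (n p) = 0.

Definition fcoef := zext k af.
Definition gcoef := zext k ag.
Definition rhs (j : nat) (p : R3) : C3 :=
  C3add (C3scal (mkC 0 om) (C3add (fcoef j p) (C3opp (Nproj (n p) (fcoef j p)))))
        (C3opp (C3cross (Lseq gcoef j p) (n p))).
Definition wcoef := wseq k rhs.
(* tangential part t of P: t_0 = n x phi gives the boundary condition *)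
Definition tcoef (j : nat) (p : R3) : C3 :=
  match j with
  | O => realC3 (rcross (n p) (phi p))
  | S j' => C3scal (RC (/ INR (S j'))) (wcoef j' p)
  end.
Definition Pcoef (j : nat) (p : R3) : C3 := C3add (C3scal (RC om) (Nproj (n p) (fcoef j p))) (tcoef j p).
Definition Qcoef (j : nat) (p : R3) : C3 :=
  C3scal (mkC 0 (- / om)) (C3add (gcoef j p) (C3cross (Lseq tcoef j p) (n p))).

Lemma rhs_vanishes_above p : vanishes_above k rhs p.
Proof.
  intros j H. unfold rhs, Lseq, Dseq, fcoef, gcoef. rewrite !zext_vanishes_above by lia.
  unfold Nproj, dotn, zero3. c3eq; ring.
Qed.

Lemma tcoef_vanishes_above p : vanishes_above (S k) tcoef p.
Proof.
  intros j H. destruct j as [|j]; [lia|]. unfold tcoef, wcoef.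
  rewrite (wseq_vanishes_above k rhs p j) by lia. unfold zero3; c3eq; ring.
Qed.

Lemma Pcoef_vanishes_above p : vanishes_above (S k) Pcoef p.
Proof.
  intros j H. unfold Pcoef, fcoef. rewrite zext_vanishes_above, tcoef_vanishes_above by lia.
  unfold Nproj, dotn, zero3; c3eq; ring.
Qed.

Lemma Qcoef_vanishes_above p : vanishes_above (S k) Qcoef p.
Proof.
  intros j H. unfold Qcoef, Lseq, Dseq, gcoef.
  rewrite zext_vanishes_above, !tcoef_vanishes_above by lia. unfold zero3; c3eq; ring.
Qed.

Lemma rhs_tangential j p : Gam p -> dotn (rhs j p) (n p) = RC 0.
Proof.
  intros Hp. assert (H := Hn p Hp). unfold rhs, Nproj, dotn, dot in *.
  set (F := fcoef j p). set (G := Lseq gcoef j p). clearbody F G.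
  destruct (n p) as [n1 n2 n3]; destruct F as [[a1 a2] [a3 a4] [a5 a6]];
    destruct G as [[b1 b2] [b3 b4] [b5 b6]].
  cbn [x1 x2 x3] in *. ceq; nsatz.
Qed.

Lemma wcoef_tangential j p : Gam p -> dotn (wcoef j p) (n p) = RC 0.
Proof. intros Hp. apply wseq_tangential. intros; apply rhs_tangential; auto. Qed.

Lemma tcoef_tangential j p : Gam p -> dotn (tcoef j p) (n p) = RC 0.
Proof.
  intros Hp. destruct j as [|j]; unfold tcoef.
  - unfold dotn, rcross; ceq; cbn [x1 x2 x3]; ring.
  - rewrite dotn_scal, wcoef_tangential by auto. ceq; ring.
Qed.

Lemma Pcoef_first_equation j p : Gam p ->
  C3add (C3cross (Lseq Qcoef j p) (n p)) (C3scal (RC (1 / om)) (Pcoef j p)) = fcoef j p.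
Proof.
  intros Hp.
  assert (HJ : INR (S j) <> 0) by (apply not_0_INR; lia).
  assert (HJ2 : INR (S (S j)) <> 0) by (apply not_0_INR; lia).
  exact (first_equation_coef (n p) om (INR (S j)) (INR (S (S j))) (fcoef j p) (gcoef j p)
    (gcoef (S j) p) (tcoef j p) (wcoef j p) (wcoef (S j) p) (Hn p Hp) Hom HJ HJ2
    (tcoef_tangential j p Hp) (wcoef_tangential j p Hp) (wcoef_tangential (S j) p Hp)
    (wseq_recursion k rhs p j (rhs_vanishes_above p))).
Qed.

Lemma Pcoef_second_equation j p :
  C3add (C3opp (C3cross (Lseq Pcoef j p) (n p))) (C3scal (mkC 0 om) (Qcoef j p)) = gcoef j p.
Proof.
  exact (second_equation_coef om (n p) (fcoef j p) (fcoef (S j) p) (tcoef j p) (tcoef (S j) p)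
    (gcoef j p) (INR (S j)) Hom).
Qed.

Lemma Pcoef_boundary p : Gam p -> C3cross (Pcoef 0 p) (n p) = realC3 (phi p).
Proof.
  intros Hp. unfold Pcoef, tcoef, Nproj, dotn, rcross.
  assert (H1 := Hn p Hp). assert (H2 := Hphi p Hp). unfold dot in *.
  set (F := fcoef 0 p). set (N := n p) in *. set (Ph := phi p) in *. clearbody F N Ph.
  destruct N as [n1 n2 n3]; destruct Ph as [q1 q2 q3];
  destruct F as [[a1 a2] [a3 a4] [a5 a6]]. cbn [x1 x2 x3] in *.
  c3eq; cbn [x1 x2 x3]; nsatz.
Qed.

Hypothesis Hsn : smoothG_R3 Gam n.
Hypothesis Hsphi : smoothG_R3 Gam phi.
Hypothesis Hsaf : forall j, smoothG_C3 Gam (af j).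
Hypothesis Hsag : forall j, smoothG_C3 Gam (ag j).

Lemma smoothG3_Lseq b j : (forall i, smoothG3 Gam (b i)) -> smoothG3 Gam (Lseq b j).
Proof. intros H; unfold Lseq, Dseq. apply smoothG3_add; apply smoothG3_scal; auto; apply smoothGc_const. Qed.

Lemma smoothG3_zext a j : (forall i, smoothG_C3 Gam (a i)) -> smoothG3 Gam (zext k a j).
Proof. intros H; unfold zext. destruct (Nat.leb j k). apply C3_smoothG3; auto. apply smoothG3_zero. Qed.

Lemma smoothG3_wcoef j : smoothG3 Gam (wcoef j).
Proof.
  assert (HR : forall i, smoothG3 Gam (rhs i)).
  { intros i. unfold rhs. apply smoothG3_add.
    - apply smoothG3_scal. apply smoothGc_const.
      apply smoothG3_add; [|apply smoothG3_opp, smoothG3_Nproj]; auto; apply smoothG3_zext; auto.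
    - apply smoothG3_opp, smoothG3_cross; auto. apply smoothG3_Lseq.
      intros; apply smoothG3_zext; auto. }
  unfold wcoef, wseq. destruct (Nat.leb j k); [|apply smoothG3_zero].
  generalize (S (k - j)). intros m. induction m; cbn [back_solve]; [apply smoothG3_zero|].
  apply smoothG3_scal; [apply smoothGc_const|]. apply smoothG3_add; auto.
  apply smoothG3_scal; auto. apply smoothGc_const.
Qed.

Lemma smoothG3_tcoef j : smoothG3 Gam (tcoef j).
Proof.
  destruct j; unfold tcoef.
  - apply smoothG3_realC3, smoothG_R3_rcross; auto.
  - apply smoothG3_scal; [apply smoothGc_const| apply smoothG3_wcoef].
Qed.

Lemma smoothG3_Pcoef j : smoothG3 Gam (Pcoef j).
Proof.
  unfold Pcoef. apply smoothG3_add; [|apply smoothG3_tcoef].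
  apply smoothG3_scal; [apply smoothGc_const|]. apply smoothG3_Nproj; auto. apply smoothG3_zext; auto.
Qed.

Lemma smoothG3_Qcoef j : smoothG3 Gam (Qcoef j).
Proof.
  unfold Qcoef. apply smoothG3_scal; [apply smoothGc_const|]. apply smoothG3_add.
  - apply smoothG3_zext; auto.
  - apply smoothG3_cross; auto. apply smoothG3_Lseq. apply smoothG3_tcoef.
Qed.

End Coefficients.

(** * Existence: the ansatz solves the problem *)

Lemma ansatz_linear (L1 L2 : R3 -> C3 -> C3)
  (H1a : forall q a b, L1 q (C3add a b) = C3add (L1 q a) (L1 q b))
  (H1s : forall q z a, L1 q (C3scal z a) = C3scal z (L1 q a))
  (H2a : forall q a b, L2 q (C3add a b) = C3add (L2 q a) (L2 q b))
  (H2s : forall q z a, L2 q (C3scal z a) = C3scal z (L2 q a)) A B k p e :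
  C3scal (Edecay e) (C3poly (fun j q => C3add (L1 q (A j q)) (L2 q (B j q))) p e (S k)) =
  C3add (L1 p (ansatz A k p e)) (L2 p (ansatz B k p e)).
Proof.
  unfold ansatz. rewrite H1s, H2s, C3poly_add, !(C3poly_linear _ H1a), !(C3poly_linear _ H2a);
    auto. c3eq; ring.
Qed.

Section Existence.
Variables (Gam : R3 -> Prop) (n : R3 -> R3) (om : R) (k : nat) (af ag : nat -> R3 -> C3)
          (phi : R3 -> R3).
Hypothesis Hn : forall p, Gam p -> dot (n p) (n p) = 1.
Hypothesis Hom : om <> 0.
Hypothesis Hphi : forall p, Gam p -> dot (phi p) (n p) = 0.

Definition usol := ansatz (Pcoef n om k af ag phi) k.
Definition vsol := ansatz (Qcoef n om k af ag phi) k.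

Lemma usol_first_equation p e : Gam p ->
  C3add (C3cross (ansatz (Lseq (Qcoef n om k af ag phi)) k p e) (n p)) (C3scal (RC (1 / om)) (usol p e))
  = C3scal (Edecay e) (C3poly af p e k).
Proof.
  intros Hp. unfold usol. rewrite <- (ansatz_linear (fun q a => C3cross a (n q))
    (fun q a => C3scal (RC (1 / om)) a)) by (intros; c3eq; ring).
  rewrite <- (C3poly_zext k af). f_equal. apply C3poly_ext. intros.
  apply (Pcoef_first_equation Gam); auto.
Qed.

Lemma vsol_second_equation p e :
  C3add (C3opp (C3cross (ansatz (Lseq (Pcoef n om k af ag phi)) k p e) (n p)))
        (C3scal (mkC 0 om) (vsol p e))
  = C3scal (Edecay e) (C3poly ag p e k).
Proof.
  unfold vsol. rewrite <- (ansatz_linear (fun q a => C3opp (C3cross a (n q)))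
    (fun q a => C3scal (mkC 0 om) a)) by (intros; c3eq; ring).
  rewrite <- (C3poly_zext k ag). f_equal. apply C3poly_ext. intros.
  apply Pcoef_second_equation; auto.
Qed.

Lemma usol_boundary p : Gam p -> C3cross (usol p 0) (n p) = realC3 (phi p).
Proof.
  intros Hp. unfold usol, ansatz. rewrite C3poly_at0, Edecay_0.
  rewrite <- (Pcoef_boundary Gam n om k af ag phi Hn Hphi p Hp). c3eq; ring.
Qed.

Lemma ansatz_solution (f g : R3 -> R -> C3) :
  smoothG_R3 Gam n -> smoothG_R3 Gam phi ->
  (forall j, smoothG_C3 Gam (af j)) -> (forall j, smoothG_C3 Gam (ag j)) ->
  (forall p e, Gam p -> 0 <= e -> f p e = C3poly af p e k) ->
  (forall p e, Gam p -> 0 <= e -> g p e = C3poly ag p e k) ->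
  IsSolution Gam n om f g phi usol vsol.
Proof.
  intros Hsn Hsphi Hsaf Hsag Hf Hg.
  split; [apply smoothGR_C3_ansatz; intros; apply smoothG3_Pcoef; auto|].
  split; [apply smoothGR_C3_ansatz; intros; apply smoothG3_Qcoef; auto|].
  split; [|split].
  - exists (ansatz (Lseq (Pcoef n om k af ag phi)) k), (ansatz (Lseq (Qcoef n om k af ag phi)) k).
    split.
    + intros p eta j Hp He. split; apply C3D_cproj, C3D_ansatz;
        [apply Pcoef_vanishes_above| apply Qcoef_vanishes_above].
    + intros p eta Hp He. split.
      * rewrite (Hf p _ Hp) by lra. apply usol_first_equation; auto.
      * rewrite (Hg p _ Hp) by lra. apply vsol_second_equation.
  - apply usol_boundary.
  - intros p Hp. split; apply finite_integral_ansatz;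
      [apply Pcoef_vanishes_above| apply Qcoef_vanishes_above].
Qed.

End Existence.

(** * Uniqueness: the homogeneous problem along a normal line *)

(* The growing mode dominates: |(e^(-sqrt i t) - e^(sqrt i t)) / 2| is at least
   sinh(t / sqrt 2) >= t / sqrt 2, which gives the (non-sharp) bound t^2 / 8. *)
Lemma sinh_mode_lower_bound t : 0 <= t ->
  t * t / 8 <= re (Cmul (RC (/2)) (Cadd (Cexpl (Copp sqrti) t) (Copp (Cexpl sqrti t)))) ^ 2 +
               im (Cmul (RC (/2)) (Cadd (Cexpl (Copp sqrti) t) (Copp (Cexpl sqrti t)))) ^ 2.
Proof.
  intros Ht. rewrite !Cexpl_eq, sqrti_eq. unfold damped_wave. cx.
  replace (- r2 * t) with (- (r2 * t)) by ring. rewrite cos_neg, sin_neg.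
  set (x := r2 * t). set (a := exp x). set (b := exp (- x)). set (c := cos x). set (d := sin x).
  assert (Hcd : d * d + c * c = 1) by (assert (H := sin2_cos2 x); unfold Rsqr in H; auto).
  assert (Hx : 0 <= x) by (unfold x; assert (H := r2_pos); nra).
  assert (Ha : 1 + x <= a) by apply exp_ineq1_le.
  assert (Hb : 0 < b <= 1) by (split; [apply exp_pos| unfold b; rewrite <- exp_0; apply exp_le; lra]).
  assert (Hx2 : x * x = t * t / 2) by (unfold x; assert (H := r2_sq); nra).
  assert (E1 : x <= a - b) by lra.
  assert (E2 : (a - b) * (a - b) <= (a + b) * (a + b)) by nra.
  assert (E3 : x * x <= (a - b) * (a - b)) by nra.
  assert (E4 : (a - b) * (a - b) = (a - b) * (a - b) * (d * d + c * c)) by (rewrite Hcd; ring).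
  assert (0 <= d * d) by nra. assert (0 <= c * c) by nra.
  nra.
Qed.

Section Homogeneous.
Variables (n0 : R3) (om : R) (W Z dW dZ : R -> C3).
Hypothesis Hn : dot n0 n0 = 1.
Hypothesis Hom : 0 < om.
Hypothesis HWc : C3cont W.
Hypothesis HZc : C3cont Z.
Hypothesis HWD : forall t, 0 < t -> C3D W t (dW t).
Hypothesis HZD : forall t, 0 < t -> C3D Z t (dZ t).
Hypothesis Heq1 : forall t, 0 < t -> C3add (C3cross (dZ t) n0) (C3scal (RC (1 / om)) (W t)) = zero3.
Hypothesis Heq2 : forall t, 0 < t ->
  C3add (C3opp (C3cross (dW t) n0)) (C3scal (mkC 0 om) (Z t)) = zero3.
Hypothesis HW0 : C3cross (W 0) n0 = zero3.
Hypothesis HWint : finite_integral_R_plus (fun t => C3norm2 (W t)).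

Lemma hom_W_eq t : 0 < t -> W t = C3scal (RC (- om)) (C3cross (dZ t) n0).
Proof.
  intros Ht. transitivity (C3add (C3scal (RC om) (C3add (C3cross (dZ t) n0) (C3scal (RC (1 / om)) (W t))))
    (C3scal (RC (- om)) (C3cross (dZ t) n0))); [c3eq; field; lra|].
  rewrite Heq1 by auto. unfold zero3; c3eq; ring.
Qed.

Lemma hom_Z_eq t : 0 < t -> Z t = C3scal (mkC 0 (- / om)) (C3cross (dW t) n0).
Proof.
  intros Ht. transitivity (C3add (C3scal (mkC 0 (- / om)) (C3add (C3opp (C3cross (dW t) n0))
    (C3scal (mkC 0 om) (Z t)))) (C3scal (mkC 0 (- / om)) (C3cross (dW t) n0))); [c3eq; field; lra|].
  rewrite Heq2 by auto. unfold zero3; c3eq; ring.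
Qed.

(* W and Z are tangential, being cross products with n0. *)
Lemma hom_W_tangential t : 0 < t -> dotn (W t) n0 = RC 0.
Proof. intros Ht. rewrite hom_W_eq by auto. unfold dotn; ceq; ring. Qed.

Lemma hom_Z_tangential t : 0 < t -> dotn (Z t) n0 = RC 0.
Proof. intros Ht. rewrite hom_Z_eq by auto. unfold dotn; ceq; ring. Qed.

Lemma hom_dW_tangential t : 0 < t -> dotn (dW t) n0 = RC 0.
Proof.
  intros Ht. destruct (CD_dotn _ _ _ n0 (HWD t Ht)) as [D1 D2]. ceq.
  - apply (deriv_vanishing _ t _ Ht D1). intros s Hs; rewrite hom_W_tangential; auto.
  - apply (deriv_vanishing _ t _ Ht D2). intros s Hs; rewrite hom_W_tangential; auto.
Qed.

Lemma hom_W0 : W 0 = zero3.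
Proof.
  assert (Hd : dotn (W 0) n0 = RC 0).
  { destruct (Ccont_dotn W n0 HWc 0) as [C1 C2]. ceq.
    - apply (cont_vanishing_at0 (fun s => re (dotn (W s) n0))); auto.
      intros; rewrite hom_W_tangential; auto.
    - apply (cont_vanishing_at0 (fun s => im (dotn (W s) n0))); auto.
      intros; rewrite hom_W_tangential; auto. }
  rewrite (normal_tangential_decomp (W 0) n0 Hn). unfold Nproj. rewrite Hd, HW0.
  unfold zero3; c3eq; ring.
Qed.

(* In terms of W and Zcross = Z x n0 the system reads W' = -i om Zcross,
   Zcross' = -W / om. *)
Definition Zcross (t : R) : C3 := C3cross (Z t) n0.

Lemma hom_dW_eq t : 0 < t -> dW t = C3scal (mkC 0 (- om)) (Zcross t).
Proof.
  intros Ht. unfold Zcross. rewrite hom_Z_eq by auto.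
  replace (C3cross (C3scal (mkC 0 (- / om)) (C3cross (dW t) n0)) n0) with
    (C3scal (mkC 0 (- / om)) (C3cross (C3cross (dW t) n0) n0)) by (c3eq; ring).
  rewrite cross_cross_tangential by (auto using hom_dW_tangential). c3eq; field; lra.
Qed.

Lemma hom_dY_eq t : 0 < t -> C3cross (dZ t) n0 = C3scal (RC (- / om)) (W t).
Proof.
  intros Ht. transitivity (C3add (C3add (C3cross (dZ t) n0) (C3scal (RC (1 / om)) (W t)))
    (C3scal (RC (- / om)) (W t))); [c3eq; field; lra|].
  rewrite Heq1 by auto. unfold zero3; c3eq; ring.
Qed.

(* The modes W + s Zcross with s^2 = i om^2 decouple the system: they satisfy
   h' = lam h with om lam = -s. *)
Definition mode (s : C) (t : R) : C3 := C3add (W t) (C3scal s (Zcross t)).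

Lemma mode_ode (s lam : C) : Cmul s s = mkC 0 (om * om) -> Cmul (RC om) lam = Copp s ->
  forall t, 0 < t -> C3D (mode s) t (C3scal lam (mode s t)).
Proof.
  intros Hs Hl t Ht. eapply C3D_ext.
  - apply C3D_add; [apply HWD; auto|]. apply (C3D_scal (fun _ => s)); [apply CD_const|].
    apply C3D_cross, HZD; auto.
  - intros; reflexivity.
  - rewrite hom_dW_eq, hom_dY_eq by auto. unfold mode.
    assert (Hoi : om * / om = 1) by (field; lra).
    set (oi := / om) in *. clearbody oi.
    destruct s as [s1 s2]; destruct lam as [l1 l2].
    injection Hs; injection Hl; cx; clear Hs Hl; intros.
    set (Yt := Zcross t). set (Wt := W t). clearbody Yt Wt.
    destruct Yt as [[y1 y2] [y3 y4] [y5 y6]]; destruct Wt as [[w1 w2] [w3 w4] [w5 w6]].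
    c3eq; nsatz.
Qed.

Lemma mode_closed_form (s lam : C) : Cmul s s = mkC 0 (om * om) -> Cmul (RC om) lam = Copp s ->
  forall t, 0 <= t -> mode s t = C3scal (Cexpl lam t) (C3scal s (Zcross 0)).
Proof.
  intros Hs Hl t Ht.
  assert (Hc : C3cont (mode s)).
  { apply C3cont_add; auto. apply C3cont_scal; [apply Ccont_const| apply C3cont_cross; auto]. }
  rewrite (linear_ode_solution (mode s) lam Hc (mode_ode s lam Hs Hl) t Ht).
  unfold mode. rewrite hom_W0. unfold zero3; c3eq; ring.
Qed.

Definition sqrti_om : C := Cmul sqrti (RC om).

Lemma sqrti_om_sq : Cmul sqrti_om sqrti_om = mkC 0 (om * om).
Proof.
  unfold sqrti_om. rewrite sqrti_eq. assert (H := r2_sq). ceq; nra.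
Qed.

Lemma opp_sqrti_om_sq : Cmul (Copp sqrti_om) (Copp sqrti_om) = mkC 0 (om * om).
Proof. rewrite <- sqrti_om_sq. ceq; ring. Qed.

Lemma hom_W_closed_form t : 0 <= t ->
  W t = C3scal (Cmul (RC (/2)) (Cadd (Cexpl (Copp sqrti) t) (Copp (Cexpl sqrti t)))) (C3scal sqrti_om (Zcross 0)).
Proof.
  intros Ht. transitivity (C3scal (RC (/2)) (C3add (mode sqrti_om t) (mode (Copp sqrti_om) t))).
  - unfold mode. c3eq; field.
  - rewrite (mode_closed_form sqrti_om (Copp sqrti)), (mode_closed_form (Copp sqrti_om) sqrti);
      auto using sqrti_om_sq, opp_sqrti_om_sq; [c3eq; ring | |]; unfold sqrti_om; ceq; ring.
Qed.

(* The growing mode e^(sqrt i t) is excluded by the integrability of |W|^2. *)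
Lemma hom_initial_mode_zero : C3scal sqrti_om (Zcross 0) = zero3.
Proof.
  apply C3norm2_eq0. set (N := C3norm2 (C3scal sqrti_om (Zcross 0))).
  assert (HN : 0 <= N) by apply C3norm2_nonneg.
  assert (Hle : N / 8 <= 0).
  { apply (quadratic_lower_bound_not_integrable (fun t => C3norm2 (W t))); auto.
    intros t Ht. rewrite hom_W_closed_form, C3norm2_scal by auto. fold N.
    assert (H := sinh_mode_lower_bound t Ht). nra. }
  lra.
Qed.

Lemma hom_W_zero t : 0 <= t -> W t = zero3.
Proof. intros Ht. rewrite hom_W_closed_form, hom_initial_mode_zero by auto. unfold zero3; c3eq; ring. Qed.

Lemma hom_Zcross_zero t : 0 <= t -> Zcross t = zero3.
Proof.
  intros Ht.
  assert (E : C3scal sqrti_om (Zcross t) = zero3).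
  { transitivity (C3scal (RC (/2)) (C3add (mode sqrti_om t) (C3opp (mode (Copp sqrti_om) t)))).
    - unfold mode. c3eq; field.
    - rewrite (mode_closed_form sqrti_om (Copp sqrti)), (mode_closed_form (Copp sqrti_om) sqrti);
        auto using sqrti_om_sq, opp_sqrti_om_sq; [| unfold sqrti_om; ceq; ring | unfold sqrti_om; ceq; ring].
      replace (C3scal (Copp sqrti_om) (Zcross 0)) with (C3opp (C3scal sqrti_om (Zcross 0))) by (c3eq; ring).
      rewrite hom_initial_mode_zero. unfold zero3; c3eq; ring. }
  assert (Hr := r2_pos).
  (* sqrt i om is invertible *)
  transitivity (C3scal (mkC (/ (2 * r2 * om)) (- / (2 * r2 * om))) (C3scal sqrti_om (Zcross t))).
  - unfold sqrti_om; rewrite sqrti_eq. c3eq; field; split; lra.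
  - rewrite E. unfold zero3; c3eq; ring.
Qed.

Lemma hom_Z_zero t : 0 <= t -> Z t = zero3.
Proof.
  assert (Hpos : forall t, 0 < t -> Z t = zero3).
  { intros s Hs. rewrite (normal_tangential_decomp (Z s) n0 Hn). unfold Nproj.
    rewrite hom_Z_tangential by auto. fold (Zcross s). rewrite hom_Zcross_zero by lra.
    unfold zero3; c3eq; ring. }
  intros [Ht| <-]; auto. apply C3cont_vanishing_at0; auto.
Qed.

End Homogeneous.

Lemma continuous_representative Gam (u : R3 -> R -> C3) p : smoothGR_C3 Gam u -> Gam p ->
  exists U : R -> C3, C3cont U /\ forall t, 0 <= t -> U t = u p t.
Proof.
  intros S Hp.
  assert (L : forall F : R -> R -> R -> R -> R, smooth4 F -> forall t,
             continuity_pt (fun s => F (x1 p) (x2 p) (x3 p) s) t).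
  { intros F HF t. assert (H := Ck_cont 0 F (HF 0%nat)).
    unfold continuity_pt, continue_in, limit1_in, limit_in. simpl. unfold R_dist.
    intros e He. destruct (H (x1 p) (x2 p) (x3 p) t e He) as [d [Hd Hx]]. exists d; split; auto.
    intros y [_ Hy]. apply Hx; auto; rewrite Rminus_diag, Rabs_R0; auto. }
  destruct (S 0%nat) as [H0 [S0 E0]]; destruct (S 1%nat) as [H1 [S1 E1]];
  destruct (S 2%nat) as [H2 [S2 E2]]; destruct (S 3%nat) as [H3 [S3 E3]];
  destruct (S 4%nat) as [H4 [S4 E4]]; destruct (S 5%nat) as [H5 [S5 E5]].
  exists (fun t => mkC3 (mkC (H0 (x1 p) (x2 p) (x3 p) t) (H1 (x1 p) (x2 p) (x3 p) t))
                   (mkC (H2 (x1 p) (x2 p) (x3 p) t) (H3 (x1 p) (x2 p) (x3 p) t))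
                   (mkC (H4 (x1 p) (x2 p) (x3 p) t) (H5 (x1 p) (x2 p) (x3 p) t))).
  split.
  - split; [|split]; intros t; split; cx; apply L; auto.
  - intros t Ht. c3eq; symmetry; [apply E0|apply E1|apply E2|apply E3|apply E4|apply E5]; auto.
Qed.

Definition line_solution (n0 : R3) (om : R) (F G : R -> C3) (b : C3) (U V : R -> C3) : Prop :=
  C3cont U /\ C3cont V /\
  exists dU dV : R -> C3,
    (forall t, 0 < t -> C3D U t (dU t) /\ C3D V t (dV t)) /\
    (forall t, 0 < t -> C3add (C3cross (dV t) n0) (C3scal (RC (1 / om)) (U t)) = F t /\
                        C3add (C3opp (C3cross (dU t) n0)) (C3scal (mkC 0 om) (V t)) = G t) /\
    C3cross (U 0) n0 = b /\
    finite_integral_R_plus (fun t => C3norm2 (U t)).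

Lemma solution_on_normal_line Gam n omega f g phi u v p :
  IsSolution Gam n omega f g phi u v -> Gam p ->
  exists U V, line_solution (n p) omega (fun t => C3scal (Edecay t) (f p t))
                (fun t => C3scal (Edecay t) (g p t)) (realC3 (phi p)) U V /\
              forall t, 0 <= t -> U t = u p t /\ V t = v p t.
Proof.
  intros [Su [Sv [[du [dv [HD HE]]] [Hb Hi]]]] Hp.
  destruct (continuous_representative Gam u p Su Hp) as [U [Uc Ue]].
  destruct (continuous_representative Gam v p Sv Hp) as [V [Vc Ve]].
  exists U, V. split; [|split; auto].
  split; [auto|]. split; [auto|]. exists (du p), (dv p). split; [|split; [|split]].
  - intros t Ht. split; apply cproj_C3D; intros j.
    + apply (deriv_local (fun s => cproj j (u p s))); auto; [|apply (HD p t j Hp Ht)].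
      intros s Hs; rewrite Ue; auto; lra.
    + apply (deriv_local (fun s => cproj j (v p s))); auto; [|apply (HD p t j Hp Ht)].
      intros s Hs; rewrite Ve; auto; lra.
  - intros t Ht. rewrite Ue, Ve by lra. apply HE; auto.
  - rewrite Ue by lra. apply Hb; auto.
  - destruct (Hi p Hp) as [[IU [M BU]] _]. split.
    + intros T HT. destruct (IU T HT) as [pr]. constructor.
      refine (Riemann_integrable_ext _ _ pr). intros x Hx. rewrite Ue; auto.
      unfold Rmin in Hx; destruct (Rle_dec 0 T); lra.
    + exists M. intros T pr HT. destruct (IU T HT) as [pr'].
      apply Rle_trans with (RiemannInt pr'); [|apply BU; auto].
      apply RiemannInt_P19; auto. intros x Hx. rewrite Ue by lra. lra.
Qed.

Lemma finite_integral_difference (U1 U2 : R -> C3) : C3cont U1 -> C3cont U2 ->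
  finite_integral_R_plus (fun t => C3norm2 (U1 t)) -> finite_integral_R_plus (fun t => C3norm2 (U2 t)) ->
  finite_integral_R_plus (fun t => C3norm2 (C3add (U1 t) (C3opp (U2 t)))).
Proof.
  intros C1 C2 I1 I2.
  apply finite_integral_dominated with
    (fun t => (C3norm2 (U1 t) + C3norm2 (U1 t)) + (C3norm2 (U2 t) + C3norm2 (U2 t))).
  - apply C3cont_norm2, C3cont_add; auto. apply C3cont_opp; auto.
  - intros t _. assert (H := C3norm2_add (U1 t) (C3opp (U2 t))). rewrite C3norm2_opp in H. lra.
  - apply finite_integral_add; apply finite_integral_add; auto.
Qed.

(* The difference of two line solutions with the same data solves the
   homogeneous problem, hence vanishes. *)
Lemma line_solution_unique n0 om F G b U1 V1 U2 V2 : dot n0 n0 = 1 -> 0 < om ->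
  line_solution n0 om F G b U1 V1 -> line_solution n0 om F G b U2 V2 ->
  forall t, 0 <= t -> U1 t = U2 t /\ V1 t = V2 t.
Proof.
  intros Hn Hom [U1c [V1c [dU1 [dV1 [D1 [E1 [B1 I1]]]]]]] [U2c [V2c [dU2 [dV2 [D2 [E2 [B2 I2]]]]]]] t Ht.
  set (W := fun s => C3add (U1 s) (C3opp (U2 s))).
  set (Z := fun s => C3add (V1 s) (C3opp (V2 s))).
  set (dW := fun s => C3add (dU1 s) (C3opp (dU2 s))).
  set (dZ := fun s => C3add (dV1 s) (C3opp (dV2 s))).
  assert (HWc : C3cont W) by (apply C3cont_add; auto; apply C3cont_opp; auto).
  assert (HZc : C3cont Z) by (apply C3cont_add; auto; apply C3cont_opp; auto).
  assert (HWD : forall s, 0 < s -> C3D W s (dW s))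
    by (intros s Hs; apply C3D_add; [|apply C3D_opp]; [apply D1| apply D2]; auto).
  assert (HZD : forall s, 0 < s -> C3D Z s (dZ s))
    by (intros s Hs; apply C3D_add; [|apply C3D_opp]; [apply D1| apply D2]; auto).
  assert (Heq1 : forall s, 0 < s ->
            C3add (C3cross (dZ s) n0) (C3scal (RC (1 / om)) (W s)) = zero3).
  { intros s Hs. destruct (E1 s Hs) as [A1 _], (E2 s Hs) as [A2 _].
    transitivity (C3add (C3add (C3cross (dV1 s) n0) (C3scal (RC (1 / om)) (U1 s)))
      (C3opp (C3add (C3cross (dV2 s) n0) (C3scal (RC (1 / om)) (U2 s))))); [unfold dZ, W; c3eq; ring|].
    rewrite A1, A2. unfold zero3; c3eq; ring. }
  assert (Heq2 : forall s, 0 < s ->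
            C3add (C3opp (C3cross (dW s) n0)) (C3scal (mkC 0 om) (Z s)) = zero3).
  { intros s Hs. destruct (E1 s Hs) as [_ A1], (E2 s Hs) as [_ A2].
    transitivity (C3add (C3add (C3opp (C3cross (dU1 s) n0)) (C3scal (mkC 0 om) (V1 s)))
      (C3opp (C3add (C3opp (C3cross (dU2 s) n0)) (C3scal (mkC 0 om) (V2 s))))); [unfold dW, Z; c3eq; ring|].
    rewrite A1, A2. unfold zero3; c3eq; ring. }
  assert (HW0 : C3cross (W 0) n0 = zero3).
  { transitivity (C3add (C3cross (U1 0) n0) (C3opp (C3cross (U2 0) n0))); [unfold W; c3eq; ring|].
    rewrite B1, B2. unfold zero3; c3eq; ring. }
  assert (HWint := finite_integral_difference U1 U2 U1c U2c I1 I2).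
  assert (Wz := hom_W_zero n0 om W Z dW dZ Hn Hom HWc HZc HWD HZD Heq1 Heq2 HW0 HWint t Ht).
  assert (Zz := hom_Z_zero n0 om W Z dW dZ Hn Hom HWc HZc HWD HZD Heq1 Heq2 HW0 HWint t Ht).
  unfold W, Z, zero3 in *. split.
  - transitivity (C3add (C3add (U1 t) (C3opp (U2 t))) (U2 t)); [c3eq; ring|].
    rewrite Wz. c3eq; ring.
  - transitivity (C3add (C3add (V1 t) (C3opp (V2 t))) (V2 t)); [c3eq; ring|].
    rewrite Zz. c3eq; ring.
Qed.

Lemma solutions_coincide Gam n omega f g phi u1 v1 u2 v2 :
  (forall p, Gam p -> dot (n p) (n p) = 1) -> 0 < omega ->
  IsSolution Gam n omega f g phi u1 v1 -> IsSolution Gam n omega f g phi u2 v2 ->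
  forall p eta, Gam p -> 0 <= eta -> u1 p eta = u2 p eta /\ v1 p eta = v2 p eta.
Proof.
  intros Hn Hom S1 S2 p eta Hp Heta.
  destruct (solution_on_normal_line _ _ _ _ _ _ _ _ p S1 Hp) as [U1 [V1 [L1 R1]]].
  destruct (solution_on_normal_line _ _ _ _ _ _ _ _ p S2 Hp) as [U2 [V2 [L2 R2]]].
  destruct (R1 eta Heta) as [<- <-], (R2 eta Heta) as [<- <-].
  exact (line_solution_unique _ _ _ _ _ _ _ _ _ (Hn p Hp) Hom L1 L2 eta Heta).
Qed.

Theorem lemma4p1 (Gam : R3 -> Prop) (n : R3 -> R3) (omega : R) (k : nat)
  (f g : R3 -> R -> C3) (phi : R3 -> R3) :
  is_closed_surface Gam -> unit_normal_field Gam n -> 0 < omega ->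
  inPk Gam k f -> inPk Gam k g ->
  smoothG_R3 Gam phi -> (forall p, Gam p -> dot (phi p) (n p) = 0) ->
  exists u v : R3 -> R -> C3,
    IsSolution Gam n omega f g phi u v /\
    (exists P Q : R3 -> R -> C3,
       inPk Gam (S k) P /\ inPk Gam (S k) Q /\
       forall p eta, Gam p -> 0 <= eta ->
         u p eta = C3scal (Edecay eta) (P p eta) /\
         v p eta = C3scal (Edecay eta) (Q p eta)) /\
    (forall u' v' : R3 -> R -> C3, IsSolution Gam n omega f g phi u' v' ->
       forall p eta, Gam p -> 0 <= eta -> u' p eta = u p eta /\ v' p eta = v p eta).
Proof.
  intros _ [Hsn Hnormal] Hom [af [Hsaf Hf]] [ag [Hsag Hg]] Hsphi Hphi.
  assert (Hn : forall p, Gam p -> dot (n p) (n p) = 1) by (intros p Hp; apply (Hnormal p Hp)).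
  assert (Hom' : omega <> 0) by lra.
  assert (Sol := ansatz_solution Gam n omega k af ag phi Hn Hom' Hphi f g Hsn Hsphi Hsaf Hsag Hf Hg).
  exists (usol n omega k af ag phi), (vsol n omega k af ag phi).
  split; [exact Sol|split].
  - exists (fun p e => C3poly (Pcoef n omega k af ag phi) p e (S k)),
           (fun p e => C3poly (Qcoef n omega k af ag phi) p e (S k)).
    split; [|split].
    + exists (Pcoef n omega k af ag phi). split; auto.
      intros j; apply smoothG3_C3, (smoothG3_Pcoef Gam); auto.
    + exists (Qcoef n omega k af ag phi). split; auto.
      intros j; apply smoothG3_C3, (smoothG3_Qcoef Gam); auto.
    + intros; split; reflexivity.
  - intros u' v' Sol'. apply (solutions_coincide Gam n omega f g phi); auto.
Qed.
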